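(* Let $N\geq 1$ be an integer. Then for all $0<t<\pi/2$, \[ \lambda_N t^{2N+2}<\left(\frac{t}{\sin t}\right)^2+\frac{t}{\tan t}-\left(2+\sum_{j=1}^{N-1}\frac{j\cdot 2^{2j+3}|B_{2j+2}|}{(2j+2)!}t^{2j+2}\right)<\mu_N t^{2N+2}, \] where \[ \lambda_N=\frac{N\cdot 2^{2N+3}|B_{2N+2}|}{(2N+2)!},\qquad \mu_N=\frac{64N}{\pi^{2N+2}}\sum_{k=1}^{\infty}\frac{1}{k^{2N-2}(4k^2-1)^2}-\frac{16(N-1)}{\pi^{2N+2}}\sum_{k=1}^{\infty}\frac{1}{k^{2N}(4k^2-1)^2}, \] and these constants are best possible (i.e. $\lambda_N$ is the largest and $\mu_N$ the smallest constant for which the respective inequality holds on $(0,\pi/2)$).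
   Context: The Bernoulli numbers $B_n$ are defined by $\frac{t}{e^t-1}=\sum_{n=0}^\infty B_n\frac{t^n}{n!}$ for $|t|<2\pi$. An empty sum is understood to be zero. *)

From Stdlib Require Import Reals Arith Factorial.
Open Scope R_scope.

(* B is a sequence of Bernoulli numbers: t/(e^t-1) = sum_n B_n t^n/n! for 0<|t|<2pi
   (at t = 0 the left side is understood as its limit 1; the coefficients are
   already uniquely determined by the punctured disc). *)
Definition is_bernoulli (B : nat -> R) : Prop :=
  forall t : R, t <> 0 -> Rabs t < 2 * PI ->
    infinite_sum (fun n => B n * t ^ n / INR (fact n)) (t / (exp t - 1)).

Fixpoint sum1 (c : nat -> R) (n : nat) : R :=
  match n with
  | O => 0
  | S m => sum1 c m + c (S m)
  end.

Definition coefB (B : nat -> R) (j : nat) : R :=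
  INR j * 2 ^ (2 * j + 3)%nat * Rabs (B (2 * j + 2)%nat) / INR (fact (2 * j + 2)%nat).

Definition Fdiff (B : nat -> R) (N : nat) (t : R) : R :=
  (t / sin t) ^ 2 + t / tan t
  - (2 + sum1 (fun j => coefB B j * t ^ (2 * j + 2)%nat) (N - 1)).

Definition lambdaN (B : nat -> R) (N : nat) : R := coefB B N.

(* mu_N in terms of the values S1 = sum_{k>=1} 1/(k^(2N-2)(4k^2-1)^2),
   S2 = sum_{k>=1} 1/(k^(2N)(4k^2-1)^2). *)
Definition muN (N : nat) (S1 S2 : R) : R :=
  64 * INR N / PI ^ (2 * N + 2)%nat * S1 - 16 * (INR N - 1) / PI ^ (2 * N + 2)%nat * S2.

Definition series_term (p : nat) (k : nat) : R :=
  1 / (INR (k + 1)%nat ^ p * (4 * INR (k + 1)%nat ^ 2 - 1) ^ 2).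

(** The proof follows the classical route through the partial fraction
    expansions of [cot] and [csc^2].  Adding them gives
    [(t/sin t)^2 + t/tan t - 2 = sum_k 4 t^4 / (a_k - t^2)^2] with
    [a_k = (k pi)^2], and expanding each summand as a power series in
    [x = t^2/a_k] shows that, with [N = M + 1],
    [Fdiff t / t^(2N+2) = sum_k 4 weight_M(t^2/a_k) / a_k^(N+1)] where
    [weight_M(x) = M/(1-x) + 1/(1-x)^2] is increasing on [[0,1)].  The Bernoulli
    numbers enter through [|B_2n| 2^(2n)/(2n)! = 2 sum_k 1/(k pi)^(2n)], so
    [lambda_N] is the value of the series at [t = 0] and [mu_N] its value at
    [t = pi/2]; monotonicity of [weight_M] gives both strict bounds, and its
    Lipschitz behaviour near the two end points shows they are sharp.

    The partial fractions are obtained from the doubling formulas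
    [f y + f (y + pi/2) = c f (2y)] for [f = cot] ([c = 2]) and [f = csc^2]
    ([c = 4]), iterated [m] times and passed to the limit by Tannery's
    theorem. *)

From Stdlib Require Import Reals Lra Lia Psatz Arith Factorial.
From Coquelicot Require Import Coquelicot.
Open Scope R_scope.

Lemma sum1_S_l (c : nat -> R) K :
  sum1 c (S K) = c 1%nat + sum1 (fun j => c (S j)) K.
Proof.
  induction K as [|K IH]; [simpl; ring|].
  change (sum1 c (S (S K))) with (sum1 c (S K) + c (S (S K))).
  rewrite IH. simpl. ring.
Qed.

Lemma sum1_sum_f_R0 (f : nat -> R) n : sum1 f (S n) = sum_f_R0 (fun i => f (S i)) n.
Proof. induction n; simpl; [ring | rewrite <- IHn; simpl; ring]. Qed.

Lemma sum_f_R0_sum1 (g : nat -> R) k : sum_f_R0 g k = g 0%nat + sum1 g k.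
Proof. induction k; simpl; [ring | rewrite IHk; ring]. Qed.

Lemma sum1_ext (f g : nat -> R) n :
  (forall j, (1 <= j <= n)%nat -> f j = g j) -> sum1 f n = sum1 g n.
Proof.
  induction n; intros H; simpl; [reflexivity|].
  rewrite IHn by (intros; apply H; lia). rewrite H by lia. reflexivity.
Qed.

Lemma sum1_scal (f : nat -> R) c n :
  sum1 (fun j => c * f j) n = c * sum1 f n.
Proof. induction n; simpl; [ring | rewrite IHn; ring]. Qed.

Lemma sum_f_R0_fold (g : nat -> R) K :
  sum_f_R0 g (2 * K + 1) =
  g 0%nat + g (S K) + sum1 (fun j => g j + g (2 * K + 2 - j)%nat) K.
Proof.
  revert g. induction K as [|K IH]; intros g; [simpl; ring|].
  replace (2 * S K + 1)%nat with (S (S (2 * K + 1))) by lia.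
  rewrite decomp_sum by lia. cbn [Init.Nat.pred].
  rewrite tech5, (IH (fun i => g (S i))), sum1_S_l.
  rewrite (sum1_ext (fun j => g (S j) + g (2 * S K + 2 - S j)%nat)
                    (fun j => g (S j) + g (S (2 * K + 2 - j)))).
  2:{ intros j Hj. do 2 f_equal. lia. }
  replace (2 * S K + 2 - 1)%nat with (S (S (2 * K + 1))) by lia.
  ring.
Qed.

Lemma sum_f_R0_even (f : nat -> R) k : (forall m, f (2 * m + 1)%nat = 0) ->
  sum_f_R0 f (2 * k + 1) = sum_f_R0 (fun m => f (2 * m)%nat) k.
Proof.
  intros H. induction k.
  - pose proof (H 0%nat) as H0. simpl in *. rewrite H0. ring.
  - replace (2 * S k + 1)%nat with (S (S (2 * k + 1))) by lia.
    rewrite (tech5 f (S (2 * k + 1))), (tech5 f (2 * k + 1)), IHk,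
      (tech5 (fun m => f (2 * m)%nat) k).
    replace (S (S (2 * k + 1))) with (2 * S k + 1)%nat by lia. rewrite H.
    replace (S (2 * k + 1)) with (2 * S k)%nat by lia. ring.
Qed.

Lemma sum1_tail_bound (f w : nat -> R) J L :
  (J <= L)%nat -> (forall j, (1 <= j <= L)%nat -> Rabs (f j) <= w j) ->
  Rabs (sum1 f L - sum1 f J) <= sum1 w L - sum1 w J.
Proof.
  intros HJ. induction HJ; intros H.
  - rewrite !Rminus_eq_0, Rabs_R0. lra.
  - simpl. specialize (IHHJ (fun j Hj => H j ltac:(lia))).
    specialize (H (S m) ltac:(lia)).
    replace (sum1 f m + f (S m) - sum1 f J) with ((sum1 f m - sum1 f J) + f (S m)) by ring.
    eapply Rle_trans; [apply Rabs_triang|]. lra.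
Qed.

Lemma infinite_sum_plus a b la lb :
  infinite_sum a la -> infinite_sum b lb -> infinite_sum (fun n => a n + b n) (la + lb).
Proof.
  intros Ha%is_series_Reals Hb%is_series_Reals.
  apply is_series_Reals, (is_series_plus _ _ _ _ Ha Hb).
Qed.

Lemma infinite_sum_scal a la c :
  infinite_sum a la -> infinite_sum (fun n => c * a n) (c * la).
Proof. intros Ha%is_series_Reals. apply is_series_Reals, (is_series_scal_l c _ _ Ha). Qed.

Lemma infinite_sum_minus a b la lb :
  infinite_sum a la -> infinite_sum b lb -> infinite_sum (fun n => a n - b n) (la - lb).
Proof.
  intros Ha%is_series_Reals Hb%is_series_Reals.
  apply is_series_Reals, (is_series_minus _ _ _ _ Ha Hb).
Qed.

Lemma infinite_sum_ext a b l :
  (forall n, a n = b n) -> infinite_sum a l -> infinite_sum b l.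
Proof. intros H Ha%is_series_Reals. apply is_series_Reals, (is_series_ext _ _ _ H Ha). Qed.

Lemma infinite_sum_0 : infinite_sum (fun _ => 0) 0.
Proof.
  intros e He. exists 0%nat. intros m _. unfold Rdist.
  assert (sum_f_R0 (fun _ => 0) m = 0) by (induction m; simpl; lra).
  rewrite H, Rminus_0_r, Rabs_R0. lra.
Qed.

Lemma infinite_sum_sum1 (f : nat -> nat -> R) (l : nat -> R) n :
  (forall j, (1 <= j <= n)%nat -> infinite_sum (f j) (l j)) ->
  infinite_sum (fun k => sum1 (fun j => f j k) n) (sum1 l n).
Proof.
  induction n as [|n IH]; intros H; simpl.
  - exact infinite_sum_0.
  - apply infinite_sum_plus; [apply IH; intros; apply H; lia | apply H; lia].
Qed.

Lemma infinite_sum_le a b la lb :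
  (forall n, a n <= b n) -> infinite_sum a la -> infinite_sum b lb -> la <= lb.
Proof.
  intros H Ha Hb.
  apply (@Rle_cv_lim (fun n => sum_f_R0 a n) (fun n => sum_f_R0 b n)); [|exact Ha|exact Hb].
  intro n. induction n; simpl; [apply H | specialize (H (S n)); lra].
Qed.

Lemma infinite_sum_ge_first a la :
  (forall n, 0 <= a n) -> infinite_sum a la -> a 0%nat <= la.
Proof.
  intros H Ha. apply (@Rle_cv_lim (fun _ => a 0%nat) (fun n => sum_f_R0 a n)); [| |exact Ha].
  - intro n. induction n; simpl; [lra | specialize (H (S n)); lra].
  - intros e He. exists 0%nat. intros. unfold Rdist. rewrite Rminus_eq_0, Rabs_R0. lra.
Qed.

Lemma infinite_sum_nonneg a la : (forall n, 0 <= a n) -> infinite_sum a la -> 0 <= la.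
Proof. intros H Ha. pose proof (infinite_sum_ge_first a la H Ha). specialize (H 0%nat). lra. Qed.

Lemma infinite_sum_lt a b la lb :
  (forall n, a n <= b n) -> a 0%nat < b 0%nat ->
  infinite_sum a la -> infinite_sum b lb -> la < lb.
Proof.
  intros H H0 Ha Hb.
  pose proof (infinite_sum_ge_first (fun n => b n - a n) _
                (fun n => ltac:(specialize (H n); lra))
                (infinite_sum_minus _ _ _ _ Hb Ha)).
  simpl in *. lra.
Qed.

Lemma ex_series_inv_sq : ex_series (fun i => / INR (S i) ^ 2).
Proof.
  assert (Htele : infinite_sum (fun i => / (INR (S i) * INR (S (S i)))) 1).
  { assert (Hp : forall n, sum_f_R0 (fun i => / (INR (S i) * INR (S (S i)))) n
                           = 1 - / INR (S (S n))).
    { induction n; [simpl; field|].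
      rewrite tech5, IHn, !S_INR. pose proof (pos_INR n). field. lra. }
    intros e He. destruct (archimed_cor1 e He) as [N [HN1 HN2]].
    exists N. intros n Hn. unfold Rdist. rewrite Hp.
    assert (0 < INR (S (S n))) by (apply lt_0_INR; lia).
    assert (/ INR (S (S n)) <= / INR N)
      by (apply Rinv_le_contravar; [apply lt_0_INR; lia | apply le_INR; lia]).
    rewrite Rabs_left1; [lra|].
    assert (0 < / INR (S (S n))) by (apply Rinv_0_lt_compat; lra). lra. }
  apply (@ex_series_le R_AbsRing R_CompleteNormedModule _
           (fun i => 2 * / (INR (S i) * INR (S (S i))))).
  - intro n. change (Rabs (/ INR (S n) ^ 2) <= 2 * / (INR (S n) * INR (S (S n)))).
    assert (1 <= INR (S n)) by (apply (le_INR 1); lia).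
    rewrite (S_INR (S n)). set (y := INR (S n)) in *. simpl pow.
    rewrite Rabs_pos_eq by (apply Rlt_le, Rinv_0_lt_compat; nra).
    apply Rmult_le_reg_l with (y * y * (y + 1)); [nra|].
    field_simplify; lra.
  - exists (2 * 1). apply is_series_Reals. exact (infinite_sum_scal _ _ 2 Htele).
Qed.

Lemma Un_cv_le_eventually (a : nat -> R) l b m0 :
  Un_cv a l -> (forall m, (m >= m0)%nat -> a m <= b) -> l <= b.
Proof.
  intros Ha Hb. destruct (Rle_or_lt l b) as [|H]; [assumption|].
  destruct (Ha (l - b)) as [N HN]; [lra|].
  specialize (HN (max N m0) ltac:(lia)). specialize (Hb (max N m0) ltac:(lia)).
  unfold Rdist in HN. apply Rabs_def2 in HN. lra.
Qed.

Lemma Un_cv_ge_eventually (a : nat -> R) l b m0 :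
  Un_cv a l -> (forall m, (m >= m0)%nat -> b <= a m) -> b <= l.
Proof.
  intros Ha Hb. destruct (Rle_or_lt b l) as [|H]; [assumption|].
  destruct (Ha (b - l)) as [N HN]; [lra|].
  specialize (HN (max N m0) ltac:(lia)). specialize (Hb (max N m0) ltac:(lia)).
  unfold Rdist in HN. apply Rabs_def2 in HN. lra.
Qed.

Lemma Un_cv_const (c : R) : Un_cv (fun _ => c) c.
Proof. intros e He. exists 0%nat. intros. unfold Rdist. rewrite Rminus_eq_0, Rabs_R0. lra. Qed.

Lemma Un_cv_scal_l (a : nat -> R) l c : Un_cv a l -> Un_cv (fun m => c * a m) (c * l).
Proof. apply CV_mult, Un_cv_const. Qed.

Lemma sum_f_R0_le_infinite_sum (a : nat -> R) l n :
  (forall k, 0 <= a k) -> infinite_sum a l -> sum_f_R0 a n <= l.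
Proof.
  intros H Ha. apply (Un_cv_ge_eventually (sum_f_R0 a) l _ n Ha).
  intros m Hm. induction Hm; [lra|]. simpl. specialize (H (S m)). lra.
Qed.

Lemma Un_cv_sum1 (u : nat -> nat -> R) (v : nat -> R) J :
  (forall j, (1 <= j <= J)%nat -> Un_cv (fun m => u m j) (v j)) ->
  Un_cv (fun m => sum1 (u m) J) (sum1 v J).
Proof.
  induction J; intros H; simpl; [apply Un_cv_const|].
  apply CV_plus; [apply IHJ; intros; apply H; lia | apply H; lia].
Qed.

Lemma le_of_forall_lt_linear (a b C r : R) :
  0 < r -> (forall s, 0 < s < r -> a < b + C * s) -> a <= b.
Proof.
  intros Hr H. destruct (Rle_or_lt a b) as [|Hab]; [assumption|]. exfalso.
  pose proof (Rabs_pos C) as HC.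
  set (s := Rmin (r / 2) ((a - b) / (2 * (Rabs C + 1)))).
  assert (Hs0 : 0 < s) by (apply Rmin_glb_lt; [lra | apply Rdiv_lt_0_compat; lra]).
  assert (Hs1 : s <= r / 2) by apply Rmin_l.
  assert (Hs2 : s <= (a - b) / (2 * (Rabs C + 1))) by apply Rmin_r.
  specialize (H s ltac:(lra)).
  assert (C * s <= (Rabs C + 1) * s) by (pose proof (Rle_abs C); nra).
  assert ((Rabs C + 1) * s <= (Rabs C + 1) * ((a - b) / (2 * (Rabs C + 1))))
    by (apply Rmult_le_compat_l; lra).
  replace ((Rabs C + 1) * ((a - b) / (2 * (Rabs C + 1)))) with ((a - b) / 2) in * by (field; lra).
  lra.
Qed.

Lemma continuity_pt_0_eq (f : R -> R) L C r : 0 < r -> continuity_pt f 0 ->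
  (forall t, 0 < t < r -> Rabs (f t - L) <= C * t ^ 2) -> f 0 = L.
Proof.
  intros Hr Hc H. apply Rminus_diag_uniq, Rabs_eq_0, Rle_antisym; [|apply Rabs_pos].
  apply le_epsilon. intros eps Heps.
  destruct (Hc eps Heps) as [del [Hdel Hf]].
  apply (le_of_forall_lt_linear _ _ (Rabs C) (Rmin (Rmin del r) 1)).
  { repeat apply Rmin_glb_lt; lra. }
  intros s Hs.
  assert (Hs1 : s < del /\ s < r /\ s < 1).
  { pose proof (Rmin_l (Rmin del r) 1). pose proof (Rmin_r (Rmin del r) 1).
    pose proof (Rmin_l del r). pose proof (Rmin_r del r). lra. }
  assert (Hfs : Rabs (f s - f 0) < eps).
  { apply (Hf s). split; [split; [exact I | lra]|].
    simpl. unfold R_dist. rewrite Rminus_0_r, Rabs_pos_eq; lra. }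
  specialize (H s ltac:(lra)).
  assert (C * s ^ 2 <= Rabs C * s).
  { pose proof (Rle_abs C). pose proof (Rabs_pos C).
    assert (0 <= s ^ 2 <= s) by (simpl; nra). nra. }
  replace (f 0 - L) with ((f s - L) - (f s - f 0)) by ring.
  eapply Rle_lt_trans; [apply Rabs_triang|]. rewrite Rabs_Ropp. lra.
Qed.

Lemma sum1_le_infinite_sum (w : nat -> R) W n :
  (forall j, (1 <= j)%nat -> 0 <= w j) -> infinite_sum (fun i => w (S i)) W -> sum1 w n <= W.
Proof.
  intros Hw HW. destruct n as [|n].
  - apply (infinite_sum_nonneg (fun i => w (S i))); [intros; apply Hw; lia | exact HW].
  - rewrite sum1_sum_f_R0. apply sum_f_R0_le_infinite_sum; [intros; apply Hw; lia | exact HW].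
Qed.

Lemma infinite_sum_tail_bound (v w : nat -> R) V W J :
  (forall j, (1 <= j)%nat -> Rabs (v j) <= w j) ->
  infinite_sum (fun i => v (S i)) V -> infinite_sum (fun i => w (S i)) W ->
  Rabs (V - sum1 v J) <= W - sum1 w J.
Proof.
  intros Hvw HV HW.
  assert (Hw : forall j, (1 <= j)%nat -> 0 <= w j)
    by (intros j Hj; specialize (Hvw j Hj); pose proof (Rabs_pos (v j)); lra).
  assert (Hcv : Un_cv (fun n => Rabs (sum1 v (S n) - sum1 v J)) (Rabs (V - sum1 v J))).
  { apply cv_cvabs. intros e He. destruct (HV e He) as [N HN]. exists N. intros n Hn.
    unfold Rdist. rewrite sum1_sum_f_R0.
    replace (sum_f_R0 (fun i => v (S i)) n - sum1 v J - (V - sum1 v J))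
      with (sum_f_R0 (fun i => v (S i)) n - V) by ring. apply HN; lia. }
  apply (Un_cv_le_eventually _ _ _ J Hcv). intros m Hm.
  eapply Rle_trans; [apply (sum1_tail_bound v w); [lia | intros; apply Hvw; lia]|].
  pose proof (sum1_le_infinite_sum w W (S m) Hw HW). lra.
Qed.

(* Dominated convergence for series: the [m]-th sum has [L m] terms. *)
Lemma tannery (u : nat -> nat -> R) (v w : nat -> R) (L : nat -> nat) W :
  (forall m j, (1 <= j <= L m)%nat -> Rabs (u m j) <= w j) ->
  infinite_sum (fun i => w (S i)) W ->
  (forall j, (1 <= j)%nat -> Un_cv (fun m => u m j) (v j)) ->
  (forall J, exists m0, forall m, (m >= m0)%nat -> (J <= L m)%nat) ->
  exists V, infinite_sum (fun i => v (S i)) V /\ Un_cv (fun m => sum1 (u m) (L m)) V.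
Proof.
  intros Hb HW Hc HL.
  assert (Hvw : forall j, (1 <= j)%nat -> Rabs (v j) <= w j).
  { intros j Hj. destruct (HL j) as [m0 Hm0].
    apply (Un_cv_le_eventually (fun m => Rabs (u m j)) _ _ m0).
    - apply cv_cvabs, Hc, Hj.
    - intros m Hm. apply Hb. specialize (Hm0 m Hm). lia. }
  assert (Hw : forall j, (1 <= j)%nat -> 0 <= w j)
    by (intros j Hj; specialize (Hvw j Hj); pose proof (Rabs_pos (v j)); lra).
  assert (Hex : ex_series (fun i => v (S i))).
  { apply (@ex_series_le R_AbsRing R_CompleteNormedModule _ (fun i => w (S i))).
    - intro n. apply (Hvw (S n)). lia.
    - exists W. apply is_series_Reals, HW. }
  destruct Hex as [V HV%is_series_Reals].
  exists V. split; [exact HV|].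
  intros eps Heps.
  destruct (HW (eps / 3)) as [n0 Hn0]; [lra|].
  set (J := S n0).
  assert (HJ : W - sum1 w J < eps / 3).
  { specialize (Hn0 n0 ltac:(lia)). unfold Rdist in Hn0. apply Rabs_def2 in Hn0.
    unfold J. rewrite sum1_sum_f_R0. lra. }
  destruct (Un_cv_sum1 u v J (fun j Hj => Hc j ltac:(lia)) (eps / 3)) as [m1 Hm1]; [lra|].
  destruct (HL J) as [m0 Hm0].
  exists (max m0 m1). intros m Hm. unfold Rdist.
  specialize (Hm1 m ltac:(lia)). unfold Rdist in Hm1.
  specialize (Hm0 m ltac:(lia)).
  pose proof (sum1_tail_bound (u m) w J (L m) Hm0 (Hb m)).
  pose proof (infinite_sum_tail_bound v w V W J Hvw HV HW).
  pose proof (sum1_le_infinite_sum w W (L m) Hw HW).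
  replace (sum1 (u m) (L m) - V) with
    ((sum1 (u m) (L m) - sum1 (u m) J) + (sum1 (u m) J - sum1 v J) + (sum1 v J - V)) by ring.
  eapply Rle_lt_trans; [apply Rabs_triang|].
  eapply Rle_lt_trans; [apply Rplus_le_compat_r, Rabs_triang|].
  rewrite (Rabs_minus_sym (sum1 v J)). lra.
Qed.

Lemma tannery_inv_sq (c : R) (A : nat -> R) (u : nat -> nat -> R) (v : nat -> R)
    (L : nat -> nat) (C : R) :
  (forall m, c = A m + sum1 (u m) (L m)) ->
  Un_cv A 1 ->
  (forall m j, (1 <= j <= L m)%nat -> Rabs (u m j) <= C / INR j ^ 2) ->
  (forall j, (1 <= j)%nat -> Un_cv (fun m => u m j) (v j)) ->
  (forall J, exists m0, forall m, (m >= m0)%nat -> (J <= L m)%nat) ->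
  infinite_sum (fun i => v (S i)) (c - 1).
Proof.
  intros Hc HA Hb Hcv HL.
  destruct ex_series_inv_sq as [W0 HW0%is_series_Reals].
  destruct (tannery u v (fun j => C / INR j ^ 2) L (C * W0) Hb
              (infinite_sum_scal _ _ C HW0) Hcv HL) as [V [HV HVcv]].
  replace (c - 1) with V; [exact HV|].
  enough (c = 1 + V) by lra.
  apply (UL_sequence (fun m => A m + sum1 (u m) (L m))).
  - apply (Un_cv_ext (fun _ => c)); [exact Hc | apply Un_cv_const].
  - apply CV_plus; assumption.
Qed.

Lemma sin_ge_cubic z : 0 <= z <= 4 -> z - z ^ 3 / 6 <= sin z.
Proof.
  intros Hz. destruct (pre_sin_bound z 0 ltac:(lra) ltac:(lra)) as [H _].
  unfold sin_approx, sin_term in H. simpl in H. lra.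
Qed.

Lemma sin_le_id z : 0 <= z <= 4 -> sin z <= z.
Proof.
  intros Hz. destruct (pre_sin_bound z 0 ltac:(lra) ltac:(lra)) as [_ H].
  unfold sin_approx, sin_term in H. simpl in H.
  assert (0 <= z * z * z * (20 - z * z)) by (apply Rmult_le_pos; nra).
  lra.
Qed.

Lemma cos_ge_quadratic z : -2 <= z <= 2 -> 1 - z ^ 2 / 2 <= cos z.
Proof.
  intros Hz. destruct (pre_cos_bound z 0 ltac:(lra) ltac:(lra)) as [H _].
  unfold cos_approx, cos_term in H. simpl in H. nra.
Qed.

Lemma sin_ge_third z : 0 <= z <= 2 -> z / 3 <= sin z.
Proof. intros Hz. pose proof (sin_ge_cubic z ltac:(lra)). nra. Qed.

Definition cot (y : R) : R := cos y / sin y.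

Lemma cot_opp z : cot (- z) = - cot z.
Proof. unfold cot. rewrite <- cos_sym, sin_neg. unfold Rdiv. rewrite Rinv_opp. ring. Qed.

Lemma Rabs_mult_cot_sub_1 z : 0 < z <= 1 -> Rabs (z * cot z - 1) <= z ^ 2.
Proof.
  intros Hz. unfold cot.
  pose proof (sin_ge_cubic z ltac:(lra)). pose proof (sin_le_id z ltac:(lra)).
  pose proof (cos_ge_quadratic z ltac:(lra)). pose proof (COS_bound z).
  assert (Hs : 5 * z / 6 <= sin z) by nra.
  replace (z * (cos z / sin z) - 1) with ((z * cos z - sin z) / sin z) by (field; lra).
  rewrite Rabs_div, (Rabs_pos_eq (sin z)) by lra.
  apply Rmult_le_reg_r with (sin z); [lra|].
  unfold Rdiv. rewrite Rmult_assoc, Rinv_l, Rmult_1_r by lra.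
  apply Rabs_le. split; nra.
Qed.

Lemma Rabs_div_sin_sq_sub_1 z : 0 < z <= 1 -> Rabs ((z / sin z) ^ 2 - 1) <= z ^ 2.
Proof.
  intros Hz.
  pose proof (sin_ge_cubic z ltac:(lra)). pose proof (sin_le_id z ltac:(lra)).
  assert (Hs : 5 * z / 6 <= sin z) by nra.
  replace ((z / sin z) ^ 2 - 1) with ((z - sin z) * (z + sin z) / sin z ^ 2) by (field; lra).
  assert (Hs2 : 0 < sin z ^ 2) by (apply pow_lt; lra).
  rewrite Rabs_pos_eq by (apply Rmult_le_pos; [nra | apply Rlt_le, Rinv_0_lt_compat; lra]).
  apply Rmult_le_reg_r with (sin z ^ 2); [lra|].
  unfold Rdiv. rewrite Rmult_assoc, Rinv_l, Rmult_1_r by lra.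
  assert ((z - sin z) * (z + sin z) <= z ^ 3 / 6 * (2 * z)) by (apply Rmult_le_compat; nra).
  assert (z ^ 2 * (25 * z ^ 2 / 36) <= z ^ 2 * sin z ^ 2)
    by (apply Rmult_le_compat_l; nra).
  nra.
Qed.

Lemma mult_tan_bound z : 0 < z <= 1 -> 0 <= z * tan z <= 2 * z ^ 2.
Proof.
  intros Hz. unfold tan.
  pose proof (sin_ge_cubic z ltac:(lra)). pose proof (sin_le_id z ltac:(lra)).
  pose proof (cos_ge_quadratic z ltac:(lra)).
  assert (Hc : 1 / 2 <= cos z) by nra.
  replace (z * (sin z / cos z)) with (z * sin z / cos z) by (field; lra).
  split; [apply Rmult_le_pos; [nra | apply Rlt_le, Rinv_0_lt_compat; lra]|].
  apply Rmult_le_reg_r with (cos z); [lra|].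
  unfold Rdiv. rewrite Rmult_assoc, Rinv_l, Rmult_1_r by lra. nra.
Qed.

Lemma div_cos_sq_bound z : 0 < z <= 1 -> 0 <= (z / cos z) ^ 2 <= 4 * z ^ 2.
Proof.
  intros Hz. pose proof (cos_ge_quadratic z ltac:(lra)).
  assert (Hc : 1 / 2 <= cos z) by nra.
  split; [apply pow2_ge_0|].
  replace ((z / cos z) ^ 2) with (z ^ 2 / cos z ^ 2) by (field; lra).
  apply Rmult_le_reg_r with (cos z ^ 2); [nra|].
  unfold Rdiv. rewrite Rmult_assoc, Rinv_l, Rmult_1_r by nra.
  assert (cos z ^ 2 >= 1 / 4) by nra. pose proof (pow2_ge_0 z). nra.
Qed.

(** * Sampling at the dyadic scales [2^(m+1)] *)

Definition dyad (m : nat) : R := 2 ^ S m.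

Lemma dyad_pos m : 0 < dyad m.
Proof. apply pow_lt; lra. Qed.

Lemma dyad_large A : exists m0, forall m, (m >= m0)%nat -> A <= dyad m.
Proof.
  destruct (INR_unbounded A) as [m0 Hm0]. exists m0. intros m Hm.
  assert (Hpow : forall k, INR k + 1 <= 2 ^ k).
  { induction k; [simpl; lra|]. rewrite S_INR. simpl.
    assert (1 <= 2 ^ k) by (apply pow_R1_Rle; lra). lra. }
  pose proof (Hpow (S m)). rewrite S_INR in H.
  assert (INR m0 <= INR m) by (apply le_INR; lia). unfold dyad. lra.
Qed.

Lemma Un_cv_dyadic (F : R -> R) l K b : 0 < b ->
  (forall z, 0 < z <= 1 -> Rabs (F z - l) <= K * z ^ 2) ->
  Un_cv (fun m => F (b / dyad m)) l.
Proof.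
  intros Hb HF eps Heps.
  destruct (dyad_large b) as [m0 Hm0].
  destruct (dyad_large ((Rabs K * b + 1) / eps)) as [m1 Hm1].
  exists (max m0 m1). intros m Hm. unfold Rdist.
  specialize (Hm0 m ltac:(lia)). specialize (Hm1 m ltac:(lia)).
  pose proof (dyad_pos m) as HM. pose proof (Rabs_pos K) as HK.
  set (z := b / dyad m).
  assert (Hz : 0 < z <= 1).
  { split; [apply Rdiv_lt_0_compat; lra|].
    apply Rmult_le_reg_r with (dyad m); [lra|].
    unfold z, Rdiv. rewrite Rmult_assoc, Rinv_l by lra. lra. }
  eapply Rle_lt_trans; [apply HF, Hz|].
  assert (K * z ^ 2 <= Rabs K * z).
  { assert (K * z ^ 2 <= Rabs K * z ^ 2)
      by (apply Rmult_le_compat_r; [apply pow2_ge_0 | apply Rle_abs]).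
    assert (z ^ 2 <= z) by (simpl; nra). nra. }
  assert (Rabs K * z * dyad m = Rabs K * b) by (unfold z; field; lra).
  assert ((Rabs K * b + 1) / eps * eps = Rabs K * b + 1) by (field; lra).
  apply Rle_lt_trans with (Rabs K * z); [assumption|].
  apply Rmult_lt_reg_r with (dyad m); [lra|]. nra.
Qed.

Lemma Un_cv_cot_dyadic b : b <> 0 -> Un_cv (fun m => / dyad m * cot (b / dyad m)) (/ b).
Proof.
  assert (Hpos : forall b, 0 < b -> Un_cv (fun m => / dyad m * cot (b / dyad m)) (/ b)).
  { intros c Hc. replace (/ c) with (/ c * 1) by ring.
    apply (Un_cv_ext (fun m => / c * ((fun z => z * cot z) (c / dyad m)))).
    { intros m. pose proof (dyad_pos m). field. lra. }
    apply Un_cv_scal_l, (Un_cv_dyadic (fun z => z * cot z) 1 1 c Hc).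
    intros z Hz. rewrite Rmult_1_l. apply Rabs_mult_cot_sub_1, Hz. }
  intros Hb. destruct (Rlt_or_le 0 b) as [Hb0|Hb0]; [apply Hpos, Hb0|].
  apply (Un_cv_ext (fun m => - (/ dyad m * cot (- b / dyad m)))).
  { intros m. replace (- b / dyad m) with (- (b / dyad m)) by (unfold Rdiv; ring).
    rewrite cot_opp. ring. }
  replace (/ b) with (- / - b) by (field; lra).
  apply CV_opp, Hpos. lra.
Qed.

Lemma Un_cv_csc_sq_dyadic b : b <> 0 ->
  Un_cv (fun m => / dyad m ^ 2 / sin (b / dyad m) ^ 2) (/ b ^ 2).
Proof.
  assert (Hpos : forall b, 0 < b ->
            Un_cv (fun m => / dyad m ^ 2 / sin (b / dyad m) ^ 2) (/ b ^ 2)).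
  { intros c Hc. replace (/ c ^ 2) with (/ c ^ 2 * 1) by ring.
    apply (Un_cv_ext (fun m => / c ^ 2 * ((fun z => (z / sin z) ^ 2) (c / dyad m)))).
    { intros m. pose proof (dyad_pos m).
      destruct (Req_dec (sin (c / dyad m)) 0) as [Hs|Hs].
      - rewrite Hs. unfold Rdiv. rewrite pow_i, Rinv_0 by lia. ring.
      - field. repeat split; lra. }
    apply Un_cv_scal_l, (Un_cv_dyadic (fun z => (z / sin z) ^ 2) 1 1 c Hc).
    intros z Hz. rewrite Rmult_1_l. apply Rabs_div_sin_sq_sub_1, Hz. }
  intros Hb. destruct (Rlt_or_le 0 b) as [Hb0|Hb0]; [apply Hpos, Hb0|].
  apply (Un_cv_ext (fun m => / dyad m ^ 2 / sin (- b / dyad m) ^ 2)).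
  { intros m. replace (- b / dyad m) with (- (b / dyad m)) by (unfold Rdiv; ring).
    rewrite sin_neg. unfold Rdiv. f_equal. f_equal. ring. }
  replace (b ^ 2) with ((- b) ^ 2) by ring. apply Hpos. lra.
Qed.

(** * Partial fractions of [cot] and [csc^2] *)

Lemma sin_plus_PI2 y : sin (y + PI / 2) = cos y.
Proof. rewrite sin_plus, sin_PI2, cos_PI2. ring. Qed.

Lemma cos_plus_PI2 y : cos (y + PI / 2) = - sin y.
Proof. rewrite cos_plus, sin_PI2, cos_PI2. ring. Qed.

Lemma cot_plus_PI z : cot (z + PI) = cot z.
Proof. unfold cot. rewrite neg_sin, neg_cos. unfold Rdiv. rewrite Rinv_opp. ring. Qed.

Lemma cot_plus_PI2 z : cot (z + PI / 2) = - tan z.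
Proof. unfold cot, tan. rewrite sin_plus_PI2, cos_plus_PI2. unfold Rdiv. ring. Qed.

Lemma cot_double y : 0 < y < PI / 2 -> cot y + cot (y + PI / 2) = 2 * cot (2 * y).
Proof.
  intros Hy. assert (0 < sin y) by (apply sin_gt_0; lra).
  assert (0 < cos y) by (apply cos_gt_0; lra).
  unfold cot. rewrite sin_plus_PI2, cos_plus_PI2, sin_2a, cos_2a. field. lra.
Qed.

Lemma inv_sin_sq_double y : 0 < y < PI / 2 ->
  / sin y ^ 2 + / sin (y + PI / 2) ^ 2 = 4 * / sin (2 * y) ^ 2.
Proof.
  intros Hy. assert (0 < sin y) by (apply sin_gt_0; lra).
  assert (0 < cos y) by (apply cos_gt_0; lra).
  rewrite sin_plus_PI2, sin_2a.
  assert (H1 : sin y ^ 2 + cos y ^ 2 = 1) by (rewrite <- (sin2_cos2 y); unfold Rsqr; ring).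
  transitivity ((sin y ^ 2 + cos y ^ 2) * (4 * / (2 * sin y * cos y) ^ 2)).
  - field. lra.
  - rewrite H1. ring.
Qed.

Lemma pow2_ge_1 m : (1 <= 2 ^ m)%nat.
Proof. induction m; simpl; lia. Qed.

Lemma INR_pow2 m : INR (2 ^ m) = 2 ^ m.
Proof. rewrite pow_INR. reflexivity. Qed.

Lemma pow2_pred_large J : exists m0, forall m, (m >= m0)%nat -> (J <= 2 ^ m - 1)%nat.
Proof.
  exists J. intros m Hm.
  assert (forall k, (k + 1 <= 2 ^ k)%nat) by (induction k; simpl; lia).
  specialize (H m). lia.
Qed.

Lemma doubling_iterate (f : R -> R) (c : R) x m :
  0 < x < PI -> c <> 0 ->
  (forall y, 0 < y < PI / 2 -> f y + f (y + PI / 2) = c * f (2 * y)) ->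
  f x = / c ^ m * sum_f_R0 (fun j => f ((x + INR j * PI) / INR (2 ^ m))) (2 ^ m - 1).
Proof.
  intros Hx Hc Hd. induction m as [|m IH].
  - simpl. replace ((x + 0 * PI) / 1) with x by field. field.
  - rewrite IH. set (M := (2 ^ m)%nat).
    assert (HM : (1 <= M)%nat) by apply pow2_ge_1.
    assert (HMr : 1 <= INR M) by (apply (le_INR 1), HM).
    replace (2 ^ S m)%nat with (2 * M)%nat by (unfold M; simpl; lia).
    rewrite (tech2 _ (M - 1) (2 * M - 1)) by lia.
    replace (2 * M - 1 - S (M - 1))%nat with (M - 1)%nat by lia.
    rewrite <- sum_plus.
    rewrite (sum_eq (fun j => f ((x + INR j * PI) / INR (2 * M))
                              + f ((x + INR (S (M - 1) + j) * PI) / INR (2 * M)))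
                    (fun j => f ((x + INR j * PI) / INR M) * c)).
    + rewrite <- scal_sum. simpl pow. field. split; [apply pow_nonzero|]; exact Hc.
    + intros j Hj.
      replace (S (M - 1) + j)%nat with (M + j)%nat by lia.
      rewrite plus_INR, mult_INR.
      set (y := (x + INR j * PI) / (INR 2 * INR M)).
      assert (HjM : INR j + 1 <= INR M) by (rewrite <- S_INR; apply le_INR; lia).
      pose proof (pos_INR j).
      replace ((x + (INR M + INR j) * PI) / (INR 2 * INR M)) with (y + PI / 2)
        by (unfold y; simpl; field; lra).
      replace ((x + INR j * PI) / INR M) with (2 * y) by (unfold y; simpl; field; lra).
      rewrite Rmult_comm. apply Hd. unfold y. simpl. split.
      * apply Rdiv_lt_0_compat; nra.
      * apply Rmult_lt_reg_r with (2 * INR M); [lra|]. unfold Rdiv.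
        rewrite Rmult_assoc, Rinv_l by lra. nra.
Qed.

(* The samples with indices [j] and [2^(m+1) - j] differ by [pi]. *)
Lemma doubling_expansion (f : R -> R) (c : R) x m :
  0 < x < PI -> c <> 0 ->
  (forall y, 0 < y < PI / 2 -> f y + f (y + PI / 2) = c * f (2 * y)) ->
  (forall z, f (z + PI) = f z) ->
  f x = / c ^ S m *
        (f (x / dyad m) + f (x / dyad m + PI / 2) +
         sum1 (fun j => f ((x + INR j * PI) / dyad m) + f ((x - INR j * PI) / dyad m))
              (2 ^ m - 1)).
Proof.
  intros Hx Hc Hd Hper.
  pose proof (pow2_ge_1 m) as Hm. pose proof (dyad_pos m) as Hdy.
  assert (Hd2 : dyad m = 2 * INR (2 ^ m)) by (rewrite INR_pow2; reflexivity).
  rewrite (doubling_iterate f c x (S m) Hx Hc Hd) at 1.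
  replace (2 ^ S m - 1)%nat with (2 * (2 ^ m - 1) + 1)%nat by (simpl; lia).
  rewrite sum_f_R0_fold.
  replace (INR (2 ^ S m)) with (dyad m) by (rewrite INR_pow2; reflexivity).
  replace (S (2 ^ m - 1)) with (2 ^ m)%nat by lia.
  replace ((x + INR 0 * PI) / dyad m) with (x / dyad m) by (simpl; field; lra).
  replace ((x + INR (2 ^ m) * PI) / dyad m) with (x / dyad m + PI / 2)
    by (rewrite Hd2; field; apply not_0_INR; lia).
  do 2 f_equal. apply sum1_ext. intros j Hj. f_equal.
  rewrite <- (Hper ((x - INR j * PI) / dyad m)). f_equal.
  rewrite minus_INR by lia.
  replace (INR (2 * (2 ^ m - 1) + 2)) with (dyad m)
    by (rewrite Hd2; replace (2 * (2 ^ m - 1) + 2)%nat with (2 * 2 ^ m)%nat by lia;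
        rewrite mult_INR; simpl (INR 2); ring).
  field. lra.
Qed.

Lemma pole_pair_range x m j : 0 < x < PI -> (1 <= j <= 2 ^ m - 1)%nat ->
  0 < (x + INR j * PI) / dyad m < PI / 2 /\ 0 < (INR j * PI - x) / dyad m < PI / 2.
Proof.
  intros Hx Hj.
  assert (Hd2 : dyad m = 2 * INR (2 ^ m)) by (rewrite INR_pow2; reflexivity).
  rewrite Hd2. set (K := INR (2 ^ m)).
  assert (HjK : INR j + 1 <= K)
    by (unfold K; rewrite <- S_INR; apply le_INR; pose proof (pow2_ge_1 m); lia).
  assert (Hj1 : 1 <= INR j) by (apply (le_INR 1); lia).
  pose proof PI_RGT_0.
  repeat split; try (apply Rdiv_lt_0_compat; nra);
    apply Rmult_lt_reg_r with (2 * K); try lra; unfold Rdiv;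
    rewrite Rmult_assoc, Rinv_l by lra; nra.
Qed.

Lemma Rabs_sin_le z : Rabs z <= 2 -> Rabs (sin z) <= Rabs z.
Proof.
  intros Hz. destruct (Rle_or_lt 0 z).
  - rewrite (Rabs_pos_eq z) in Hz |- * by lra.
    pose proof (sin_le_id z ltac:(lra)). pose proof (sin_ge_third z ltac:(lra)).
    rewrite Rabs_pos_eq; lra.
  - rewrite (Rabs_left z) in Hz |- * by lra.
    pose proof (sin_le_id (- z) ltac:(lra)). pose proof (sin_ge_third (- z) ltac:(lra)).
    rewrite sin_neg in *. rewrite Rabs_left1; lra.
Qed.

Lemma Rabs_cot_sub_le p q : 0 < p <= 2 -> 0 < q <= 2 ->
  Rabs (cot p - cot q) <= 9 * Rabs (q - p) / (p * q).
Proof.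
  intros Hp Hq.
  pose proof (sin_ge_third p ltac:(lra)). pose proof (sin_ge_third q ltac:(lra)).
  assert (Hpq : 0 < sin p * sin q) by nra.
  replace (cot p - cot q) with (sin (q - p) / (sin p * sin q))
    by (unfold cot; rewrite sin_minus; field; lra).
  rewrite Rabs_div, (Rabs_pos_eq (sin p * sin q)) by lra.
  pose proof (Rabs_sin_le (q - p) ltac:(apply Rabs_le; lra)).
  apply Rle_trans with (Rabs (q - p) / (p / 3 * (q / 3))).
  - unfold Rdiv. apply Rmult_le_compat; [apply Rabs_pos | apply Rlt_le, Rinv_0_lt_compat; lra
      | lra | apply Rinv_le_contravar; [nra | apply Rmult_le_compat; lra]].
  - right. field. lra.
Qed.

Lemma cot_pair_bound x m j : 0 < x < PI -> (1 <= j <= 2 ^ m - 1)%nat ->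
  Rabs (x * (/ dyad m * cot ((x + INR j * PI) / dyad m)
             + / dyad m * cot ((x - INR j * PI) / dyad m)))
  <= 18 * x ^ 2 / (PI * (PI - x)) / INR j ^ 2.
Proof.
  intros Hx Hj. destruct (pole_pair_range x m j Hx Hj) as [Hp Hq].
  pose proof (dyad_pos m) as HM. pose proof PI_RGT_0. pose proof PI_4.
  assert (Hj1 : 1 <= INR j) by (apply (le_INR 1); lia).
  set (d := dyad m) in *.
  set (p := (x + INR j * PI) / d) in *. set (q := (INR j * PI - x) / d) in *.
  replace ((x - INR j * PI) / d) with (- q) by (unfold q; field; lra).
  rewrite cot_opp.
  replace (x * (/ d * cot p + / d * - cot q)) with (x / d * (cot p - cot q)) by (field; lra).
  rewrite Rabs_mult, (Rabs_pos_eq (x / d)) by (apply Rlt_le, Rdiv_lt_0_compat; lra).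
  eapply Rle_trans.
  { apply Rmult_le_compat_l; [apply Rlt_le, Rdiv_lt_0_compat; lra|].
    apply Rabs_cot_sub_le; lra. }
  replace (q - p) with (- (2 * x / d)) by (unfold p, q; field; lra).
  rewrite Rabs_Ropp, Rabs_pos_eq by (apply Rlt_le, Rdiv_lt_0_compat; lra).
  replace (x / d * (9 * (2 * x / d) / (p * q)))
    with (18 * x ^ 2 / ((x + INR j * PI) * (INR j * PI - x)))
    by (unfold p, q; field; repeat split; nra).
  replace (18 * x ^ 2 / (PI * (PI - x)) / INR j ^ 2)
    with (18 * x ^ 2 / (INR j * PI * (INR j * (PI - x)))) by (field; split; nra).
  assert (0 < INR j * PI) by nra. assert (0 < INR j * (PI - x)) by nra.
  unfold Rdiv. apply Rmult_le_compat_l; [nra|].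
  apply Rinv_le_contravar; [nra|]. apply Rmult_le_compat; nra.
Qed.

Lemma inv_sin_sq_scaled_le d y : 0 < d -> 0 < y <= 2 -> / d ^ 2 / sin y ^ 2 <= 9 / (d * y) ^ 2.
Proof.
  intros Hd Hy. pose proof (sin_ge_third y ltac:(lra)).
  unfold Rdiv.
  replace (9 * / (d * y) ^ 2) with (/ (d ^ 2 * (y / 3) ^ 2)) by (field; lra).
  rewrite <- Rinv_mult. apply Rinv_le_contravar.
  - apply Rmult_lt_0_compat; apply pow_lt; lra.
  - apply Rmult_le_compat_l; [apply pow_le; lra|]. apply pow_incr. lra.
Qed.

Lemma csc_sq_pair_bound x m j : 0 < x < PI -> (1 <= j <= 2 ^ m - 1)%nat ->
  Rabs (x ^ 2 * (/ dyad m ^ 2 / sin ((x + INR j * PI) / dyad m) ^ 2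
                 + / dyad m ^ 2 / sin ((x - INR j * PI) / dyad m) ^ 2))
  <= 9 * x ^ 2 * (/ PI ^ 2 + / (PI - x) ^ 2) / INR j ^ 2.
Proof.
  intros Hx Hj. destruct (pole_pair_range x m j Hx Hj) as [Hp Hq].
  pose proof (dyad_pos m) as HM. pose proof PI_RGT_0. pose proof PI_4.
  assert (Hj1 : 1 <= INR j) by (apply (le_INR 1); lia).
  set (d := dyad m) in *.
  set (p := (x + INR j * PI) / d) in *. set (q := (INR j * PI - x) / d) in *.
  replace ((x - INR j * PI) / d) with (- q) by (unfold q; field; lra).
  rewrite sin_neg. replace ((- sin q) ^ 2) with (sin q ^ 2) by ring.
  pose proof (inv_sin_sq_scaled_le d p HM ltac:(lra)) as B1.
  pose proof (inv_sin_sq_scaled_le d q HM ltac:(lra)) as B2.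
  replace (d * p) with (x + INR j * PI) in B1 by (unfold p; field; lra).
  replace (d * q) with (INR j * PI - x) in B2 by (unfold q; field; lra).
  assert (B1' : 9 / (x + INR j * PI) ^ 2 <= 9 / (INR j * PI) ^ 2).
  { unfold Rdiv. apply Rmult_le_compat_l; [lra|].
    apply Rinv_le_contravar; [apply pow_lt; nra | apply pow_incr; nra]. }
  assert (B2' : 9 / (INR j * PI - x) ^ 2 <= 9 / (INR j * (PI - x)) ^ 2).
  { unfold Rdiv. apply Rmult_le_compat_l; [lra|].
    apply Rinv_le_contravar; [apply pow_lt; nra | apply pow_incr; nra]. }
  assert (P1 : 0 <= / d ^ 2 / sin p ^ 2).
  { unfold Rdiv. apply Rmult_le_pos; apply Rlt_le, Rinv_0_lt_compat, pow_lt;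
      [lra | pose proof (sin_ge_third p ltac:(lra)); lra]. }
  assert (P2 : 0 <= / d ^ 2 / sin q ^ 2).
  { unfold Rdiv. apply Rmult_le_pos; apply Rlt_le, Rinv_0_lt_compat, pow_lt;
      [lra | pose proof (sin_ge_third q ltac:(lra)); lra]. }
  rewrite Rabs_pos_eq by (apply Rmult_le_pos; [apply pow2_ge_0 | lra]).
  replace (9 * x ^ 2 * (/ PI ^ 2 + / (PI - x) ^ 2) / INR j ^ 2)
    with (x ^ 2 * (9 / (INR j * PI) ^ 2 + 9 / (INR j * (PI - x)) ^ 2)) by (field; lra).
  apply Rmult_le_compat_l; [apply pow2_ge_0 | lra].
Qed.

Theorem cot_partial_fraction x : 0 < x < PI ->
  infinite_sum (fun i => x * (/ (x + INR (S i) * PI) + / (x - INR (S i) * PI)))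
               (x * cot x - 1).
Proof.
  intros Hx. pose proof PI_RGT_0.
  apply (tannery_inv_sq (x * cot x)
           (fun m => x / dyad m * cot (x / dyad m) - x / dyad m * tan (x / dyad m))
           (fun m j => x * (/ dyad m * cot ((x + INR j * PI) / dyad m)
                            + / dyad m * cot ((x - INR j * PI) / dyad m)))
           (fun j => x * (/ (x + INR j * PI) + / (x - INR j * PI)))
           (fun m => 2 ^ m - 1)%nat (18 * x ^ 2 / (PI * (PI - x)))).
  - intros m. pose proof (dyad_pos m).
    rewrite (doubling_expansion cot 2 x m Hx ltac:(lra) cot_double cot_plus_PI) at 1.
    rewrite cot_plus_PI2.
    rewrite (sum1_ext (fun j => x * (/ dyad m * cot ((x + INR j * PI) / dyad m)
                                     + / dyad m * cot ((x - INR j * PI) / dyad m)))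
                      (fun j => x / dyad m * (cot ((x + INR j * PI) / dyad m)
                                            + cot ((x - INR j * PI) / dyad m))))
      by (intros; field; lra).
    rewrite sum1_scal. change (2 ^ S m) with (dyad m). field. lra.
  - replace 1 with (1 - 0) by ring. apply CV_minus.
    + apply (Un_cv_dyadic (fun z => z * cot z) 1 1 x); [lra|].
      intros z Hz. rewrite Rmult_1_l. apply Rabs_mult_cot_sub_1, Hz.
    + apply (Un_cv_dyadic (fun z => z * tan z) 0 2 x); [lra|].
      intros z Hz. pose proof (mult_tan_bound z Hz).
      rewrite Rminus_0_r, Rabs_pos_eq; lra.
  - intros m j Hj. apply cot_pair_bound; assumption.
  - intros j Hj. apply Un_cv_scal_l, CV_plus; apply Un_cv_cot_dyadic;
      assert (1 <= INR j) by (apply (le_INR 1); lia); nra.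
  - apply pow2_pred_large.
Qed.

Theorem csc_sq_partial_fraction x : 0 < x < PI ->
  infinite_sum (fun i => x ^ 2 * (/ (x + INR (S i) * PI) ^ 2 + / (x - INR (S i) * PI) ^ 2))
               (x ^ 2 * / sin x ^ 2 - 1).
Proof.
  intros Hx. pose proof PI_RGT_0.
  apply (tannery_inv_sq (x ^ 2 * / sin x ^ 2)
           (fun m => (x / dyad m / sin (x / dyad m)) ^ 2 + (x / dyad m / cos (x / dyad m)) ^ 2)
           (fun m j => x ^ 2 * (/ dyad m ^ 2 / sin ((x + INR j * PI) / dyad m) ^ 2
                                + / dyad m ^ 2 / sin ((x - INR j * PI) / dyad m) ^ 2))
           (fun j => x ^ 2 * (/ (x + INR j * PI) ^ 2 + / (x - INR j * PI) ^ 2))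
           (fun m => 2 ^ m - 1)%nat (9 * x ^ 2 * (/ PI ^ 2 + / (PI - x) ^ 2))).
  - intros m. pose proof (dyad_pos m).
    assert (Hper : forall z, / sin (z + PI) ^ 2 = / sin z ^ 2)
      by (intros z; rewrite neg_sin; f_equal; ring).
    assert (H4 : 4 ^ S m = dyad m ^ 2)
      by (unfold dyad; rewrite <- pow_mult, Nat.mul_comm, pow_mult; f_equal; ring).
    rewrite (doubling_expansion (fun z => / sin z ^ 2) 4 x m Hx ltac:(lra)
               inv_sin_sq_double Hper) at 1.
    rewrite sin_plus_PI2, H4.
    rewrite (sum1_ext (fun j => x ^ 2 * (/ dyad m ^ 2 / sin ((x + INR j * PI) / dyad m) ^ 2
                                + / dyad m ^ 2 / sin ((x - INR j * PI) / dyad m) ^ 2))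
                      (fun j => x ^ 2 * / dyad m ^ 2 *
                                  (/ sin ((x + INR j * PI) / dyad m) ^ 2
                                   + / sin ((x - INR j * PI) / dyad m) ^ 2)))
      by (intros; unfold Rdiv; ring).
    rewrite sum1_scal. unfold Rdiv. rewrite !Rpow_mult_distr, !pow_inv. ring.
  - replace 1 with (1 + 0) by ring. apply CV_plus.
    + apply (Un_cv_dyadic (fun z => (z / sin z) ^ 2) 1 1 x); [lra|].
      intros z Hz. rewrite Rmult_1_l. apply Rabs_div_sin_sq_sub_1, Hz.
    + apply (Un_cv_dyadic (fun z => (z / cos z) ^ 2) 0 4 x); [lra|].
      intros z Hz. pose proof (div_cos_sq_bound z Hz).
      rewrite Rminus_0_r, Rabs_pos_eq; lra.
  - intros m j Hj. apply csc_sq_pair_bound; assumption.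
  - intros j Hj. apply Un_cv_scal_l, CV_plus; apply Un_cv_csc_sq_dyadic;
      assert (1 <= INR j) by (apply (le_INR 1); lia); nra.
  - apply pow2_pred_large.
Qed.

(** * Power series of [x coth x] and [x cot x] *)

Definition pseries_bounded (a : nat -> R) (r : R) : Prop :=
  exists M, forall n, Rabs (a n * r ^ n) <= M.

Lemma CV_radius_gt_of_bounded a r x :
  pseries_bounded a r -> Rabs x < r -> Rbar_lt (Rabs x) (CV_radius a).
Proof.
  intros H Hx. destruct (CV_radius_bounded a) as [Hub _]. pose proof (Hub r H) as Hr.
  destruct (CV_radius a) as [c| |]; simpl in *; try tauto. lra.
Qed.

Lemma pseries_bounded_of_ex_series a r :
  ex_series (fun n => a n * r ^ n) -> pseries_bounded a r.
Proof.
  intros H%ex_series_lim_0%is_lim_seq_Reals.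
  destruct (maj_by_pos _ (exist _ 0 H)) as [M [_ HM]]. exists M. exact HM.
Qed.

Lemma pseries_bounded_le a b r :
  (forall n, Rabs (a n) <= Rabs (b n)) -> pseries_bounded b r -> pseries_bounded a r.
Proof.
  intros H [M HM]. exists M. intros n. specialize (HM n). specialize (H n).
  rewrite Rabs_mult in *. eapply Rle_trans; [|exact HM].
  apply Rmult_le_compat_r; [apply Rabs_pos | exact H].
Qed.

Lemma is_pseries_Reals (a : nat -> R) x l :
  is_pseries a x l <-> infinite_sum (fun n => a n * x ^ n) l.
Proof.
  unfold is_pseries. rewrite <- is_series_Reals.
  assert (E : forall n, scal (pow_n x n) (a n) = a n * x ^ n)
    by (intros n; rewrite pow_n_pow; apply Rmult_comm).
  split; apply is_series_ext; intros n; rewrite E; reflexivity.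
Qed.

Lemma ex_pseries_of_infinite_sum (a : nat -> R) x l :
  infinite_sum (fun n => a n * x ^ n) l -> ex_pseries a x.
Proof. intros H. exists l. apply is_pseries_Reals, H. Qed.

Lemma PSeries_of_infinite_sum a x l : infinite_sum (fun n => a n * x ^ n) l -> PSeries a x = l.
Proof. intros H. apply is_pseries_unique, is_pseries_Reals, H. Qed.

Lemma pseries_bounded_of_infinite_sum a r l :
  infinite_sum (fun n => a n * r ^ n) l -> pseries_bounded a r.
Proof. intros H. apply pseries_bounded_of_ex_series. exists l. apply is_series_Reals, H. Qed.

Lemma pseries_coef_unique a b r : 0 < r -> pseries_bounded a r -> pseries_bounded b r ->
  (forall y, Rabs y < r -> PSeries a y = PSeries b y) -> forall n, a n = b n.
Proof.
  intros Hr Ha Hb H n. apply PSeries_ext_recip.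
  - rewrite <- Rabs_R0. apply (CV_radius_gt_of_bounded a r 0 Ha). rewrite Rabs_R0. exact Hr.
  - rewrite <- Rabs_R0. apply (CV_radius_gt_of_bounded b r 0 Hb). rewrite Rabs_R0. exact Hr.
  - exists (mkposreal r Hr). intros y Hy. apply H.
    change (Rabs (y - 0) < r) in Hy. rewrite Rminus_0_r in Hy. exact Hy.
Qed.

Definition sinh_coef (n : nat) : R := (1 - (-1) ^ n) / 2 * / INR (fact n).
Definition cosh_coef (n : nat) : R := (1 + (-1) ^ n) / 2 * / INR (fact n).
Definition xcosh_coef (n : nat) : R := INR n * sinh_coef n.

Lemma sinh_coef_even m : sinh_coef (2 * m) = 0.
Proof. unfold sinh_coef. rewrite pow_1_even. field. apply INR_fact_neq_0. Qed.

Lemma sinh_coef_odd m : sinh_coef (2 * m + 1) = / INR (fact (2 * m + 1)).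
Proof.
  unfold sinh_coef. rewrite Nat.add_1_r, pow_1_odd. field. apply INR_fact_neq_0.
Qed.

Lemma xcosh_coef_even m : xcosh_coef (2 * m) = 0.
Proof. unfold xcosh_coef. rewrite sinh_coef_even. ring. Qed.

Lemma xcosh_coef_odd m : xcosh_coef (2 * m + 1) = / INR (fact (2 * m)).
Proof.
  unfold xcosh_coef. rewrite sinh_coef_odd. replace (2 * m + 1)%nat with (S (2 * m)) by lia.
  rewrite fact_simpl, mult_INR. field. split; [apply INR_fact_neq_0 | apply not_0_INR; lia].
Qed.

Lemma infinite_sum_exp x : infinite_sum (fun n => / INR (fact n) * x ^ n) (exp x).
Proof. apply is_pseries_Reals, is_exp_Reals. Qed.

Lemma sinh_pseries x : infinite_sum (fun n => sinh_coef n * x ^ n) (sinh x).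
Proof.
  unfold sinh. replace ((exp x - exp (- x)) / 2) with (/ 2 * (exp x - exp (- x))) by field.
  eapply infinite_sum_ext;
    [| exact (infinite_sum_scal _ _ (/ 2)
                (infinite_sum_minus _ _ _ _ (infinite_sum_exp x) (infinite_sum_exp (- x))))].
  intros n. unfold sinh_coef. replace (- x) with ((-1) * x) by ring.
  rewrite Rpow_mult_distr. field. apply INR_fact_neq_0.
Qed.

Lemma cosh_pseries x : infinite_sum (fun n => cosh_coef n * x ^ n) (cosh x).
Proof.
  unfold cosh. replace ((exp x + exp (- x)) / 2) with (/ 2 * (exp x + exp (- x))) by field.
  eapply infinite_sum_ext;
    [| exact (infinite_sum_scal _ _ (/ 2)
                (infinite_sum_plus _ _ _ _ (infinite_sum_exp x) (infinite_sum_exp (- x))))].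
  intros n. unfold cosh_coef. replace (- x) with ((-1) * x) by ring.
  rewrite Rpow_mult_distr. field. apply INR_fact_neq_0.
Qed.

Lemma xcosh_pseries x : infinite_sum (fun n => xcosh_coef n * x ^ n) (x * cosh x).
Proof.
  pose proof (cosh_pseries x) as H. apply is_pseries_Reals, is_pseries_incr_1 in H.
  apply is_pseries_Reals in H. eapply infinite_sum_ext; [|exact H].
  intros [|k]; simpl.
  - unfold xcosh_coef, zero. simpl. ring.
  - unfold xcosh_coef, sinh_coef, cosh_coef. rewrite fact_simpl, mult_INR. simpl pow.
    assert (INR (fact k) <> 0) by apply INR_fact_neq_0.
    assert (INR (S k) <> 0) by (apply not_0_INR; lia).
    field. split; assumption.
Qed.

Lemma sinh_coef_bounded r : pseries_bounded sinh_coef r.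
Proof. apply (pseries_bounded_of_infinite_sum _ _ _ (sinh_pseries r)). Qed.

Lemma xcosh_coef_bounded r : pseries_bounded xcosh_coef r.
Proof. apply (pseries_bounded_of_infinite_sum _ _ _ (xcosh_pseries r)). Qed.

(* The generating function at [2x], plus [x], is [x coth x]. *)
Definition coth_coef (B : nat -> R) (n : nat) : R :=
  B n * 2 ^ n / INR (fact n) + (if Nat.eqb n 1 then 1 else 0).

Lemma infinite_sum_id x : infinite_sum (fun n => (if Nat.eqb n 1 then 1 else 0) * x ^ n) x.
Proof.
  intros e He. exists 1%nat. intros n Hn. unfold Rdist.
  assert (sum_f_R0 (fun n => (if Nat.eqb n 1 then 1 else 0) * x ^ n) n = x).
  { induction Hn; [simpl; ring|].
    rewrite tech5, IHHn. destruct m; [lia|]. simpl. ring. }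
  rewrite H, Rminus_eq_0, Rabs_R0. lra.
Qed.

Lemma exp_double_sub_1_neq_0 x : x <> 0 -> exp (2 * x) - 1 <> 0.
Proof.
  intros Hx H. assert (exp (2 * x) = exp 0) by (rewrite exp_0; lra).
  apply exp_inv in H0. lra.
Qed.

Lemma coth_pseries B x : is_bernoulli B -> x <> 0 -> Rabs x < PI ->
  infinite_sum (fun n => coth_coef B n * x ^ n) (x * (exp (2 * x) + 1) / (exp (2 * x) - 1)).
Proof.
  intros HB Hx Hxp.
  assert (H2a : Rabs (2 * x) < 2 * PI) by (rewrite Rabs_mult, Rabs_pos_eq by lra; lra).
  pose proof (infinite_sum_plus _ _ _ _ (HB (2 * x) ltac:(lra) H2a) (infinite_sum_id x)) as H.
  replace (x * (exp (2 * x) + 1) / (exp (2 * x) - 1)) with (2 * x / (exp (2 * x) - 1) + x)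
    by (field; apply exp_double_sub_1_neq_0, Hx).
  eapply infinite_sum_ext; [|exact H]. intros n. unfold coth_coef.
  rewrite Rpow_mult_distr. field. apply INR_fact_neq_0.
Qed.

Lemma coth_coef_bounded B : is_bernoulli B -> pseries_bounded (coth_coef B) 1.
Proof.
  intros HB. pose proof PI2_1.
  apply (pseries_bounded_of_infinite_sum _ _ _
           (coth_pseries B 1 HB ltac:(lra) ltac:(rewrite Rabs_R1; lra))).
Qed.

Lemma PS_mult_coth_sinh B : is_bernoulli B ->
  forall n, PS_mult (coth_coef B) sinh_coef n = xcosh_coef n.
Proof.
  intros HB. pose proof (coth_coef_bounded B HB) as Hp.
  assert (Hrp : forall y, Rabs y < 1 -> Rbar_lt (Rabs y) (CV_radius (coth_coef B)))
    by (intros; apply (CV_radius_gt_of_bounded _ 1); assumption).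
  assert (Hrs : forall y, Rabs y < 1 -> Rbar_lt (Rabs y) (CV_radius sinh_coef))
    by (intros; apply (CV_radius_gt_of_bounded _ 1); [apply sinh_coef_bounded | assumption]).
  assert (Hm : pseries_bounded (PS_mult (coth_coef B) sinh_coef) (1 / 2)).
  { apply pseries_bounded_of_ex_series.
    destruct (ex_pseries_mult (coth_coef B) sinh_coef (1 / 2)) as [l Hl];
      [apply Hrp | apply Hrs | ]; try (rewrite Rabs_pos_eq; lra).
    exists l. apply is_series_Reals, is_pseries_Reals, Hl. }
  apply (pseries_coef_unique _ _ (1 / 2) ltac:(lra) Hm (xcosh_coef_bounded _)).
  intros y Hy.
  destruct (Req_dec y 0) as [->|Hy0].
  { rewrite !PSeries_0. unfold PS_mult, xcosh_coef, sinh_coef. simpl. field. }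
  rewrite PSeries_mult by (apply Hrp || apply Hrs; lra).
  pose proof PI2_1.
  rewrite (PSeries_of_infinite_sum _ _ _ (coth_pseries B y HB Hy0 ltac:(lra))),
    (PSeries_of_infinite_sum _ _ _ (sinh_pseries y)),
    (PSeries_of_infinite_sum _ _ _ (xcosh_pseries y)).
  pose proof (exp_double_sub_1_neq_0 y Hy0) as He2.
  unfold sinh, cosh. rewrite exp_Ropp.
  replace (2 * y) with (y + y) in * by ring. rewrite exp_plus in *.
  pose proof (exp_pos y). field. split; lra.
Qed.

Lemma PS_mult_coth_sinh_S B (HB : is_bernoulli B) n :
  sum_f_R0 (fun k => coth_coef B k * sinh_coef (S n - k)) n + coth_coef B (S n) * sinh_coef 0
  = xcosh_coef (S n).
Proof.
  rewrite <- (PS_mult_coth_sinh B HB (S n)). unfold PS_mult. rewrite tech5.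
  do 3 f_equal. lia.
Qed.

Lemma sinh_coef_0 : sinh_coef 0 = 0.
Proof. exact (sinh_coef_even 0). Qed.

Lemma sinh_coef_1 : sinh_coef 1 = 1.
Proof. unfold sinh_coef. simpl. field. Qed.

Lemma coth_coef_0 B (HB : is_bernoulli B) : coth_coef B 0 = 1.
Proof.
  pose proof (PS_mult_coth_sinh_S B HB 0) as H. simpl in H.
  rewrite sinh_coef_0, sinh_coef_1 in H.
  unfold xcosh_coef in H. rewrite sinh_coef_1 in H. simpl in H. lra.
Qed.

Lemma coth_coef_odd B (HB : is_bernoulli B) m : coth_coef B (2 * m + 1) = 0.
Proof.
  induction m as [m IH] using lt_wf_ind.
  pose proof (PS_mult_coth_sinh_S B HB (2 * m + 1)) as H.
  rewrite sinh_coef_0, Rmult_0_r, Rplus_0_r in H.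
  replace (S (2 * m + 1)) with (2 * (m + 1))%nat in H by lia. rewrite xcosh_coef_even in H.
  replace (2 * m + 1)%nat with (S (2 * m)) in H by lia.
  rewrite tech5 in H. replace (2 * (m + 1) - S (2 * m))%nat with 1%nat in H by lia.
  rewrite sinh_coef_1 in H.
  rewrite (sum_eq_R0 (fun k => coth_coef B k * sinh_coef (2 * (m + 1) - k))) in H.
  - replace (S (2 * m)) with (2 * m + 1)%nat in H by lia. lra.
  - intros k Hk. destruct (Nat.Even_or_Odd k) as [[a ->]|[a ->]].
    + replace (2 * (m + 1) - 2 * a)%nat with (2 * (m + 1 - a))%nat by lia.
      rewrite sinh_coef_even. ring.
    + rewrite IH by lia. ring.
Qed.

(* Substituting [x -> i x] turns [coth, sinh, cosh] into [cot, sin, cos]; on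
   coefficients this is the sign [(-1)^(n/2)], legitimate since [x coth x] is even
   and [sinh], [x cosh x] are odd. *)
Definition half_sign (n : nat) : R := (-1) ^ (Nat.div2 n).

Definition cot_coef B n := half_sign n * coth_coef B n.
Definition sin_coef n := half_sign n * sinh_coef n.
Definition xcos_coef n := half_sign n * xcosh_coef n.

Lemma half_sign_even a : half_sign (2 * a) = (-1) ^ a.
Proof. unfold half_sign. rewrite Nat.div2_double. reflexivity. Qed.

Lemma half_sign_odd a : half_sign (2 * a + 1) = (-1) ^ a.
Proof. unfold half_sign. rewrite Nat.div2_odd'. reflexivity. Qed.

Lemma Rabs_half_sign n : Rabs (half_sign n) = 1.
Proof. apply pow_1_abs. Qed.

Lemma PS_mult_cot_sin B (HB : is_bernoulli B) n : PS_mult (cot_coef B) sin_coef n = xcos_coef n.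
Proof.
  unfold xcos_coef. rewrite <- (PS_mult_coth_sinh B HB n). unfold PS_mult.
  rewrite scal_sum. apply sum_eq. intros k Hk. unfold cot_coef, sin_coef.
  destruct (Nat.Even_or_Odd k) as [[a ->]|[a ->]].
  - destruct (Nat.Even_or_Odd (n - 2 * a)) as [[b Hb]|[b Hb]]; rewrite Hb.
    + rewrite sinh_coef_even. ring.
    + replace n with (2 * (a + b) + 1)%nat by lia.
      rewrite half_sign_even, !half_sign_odd, pow_add. ring.
  - rewrite (coth_coef_odd B HB a). ring.
Qed.

Lemma PSeries_odd (a : nat -> R) (l x : R) : (forall n, a (2 * n)%nat = 0) ->
  infinite_sum (fun n => a (2 * n + 1)%nat * (x ^ 2) ^ n) l -> PSeries a x = x * l.
Proof.
  intros He Ho.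
  assert (E : infinite_sum (fun n => a (2 * n)%nat * (x ^ 2) ^ n) 0)
    by (eapply infinite_sum_ext; [|exact infinite_sum_0]; intros n; rewrite He; ring).
  rewrite PSeries_odd_even by (eapply ex_pseries_of_infinite_sum; eassumption).
  rewrite (PSeries_of_infinite_sum _ _ _ E), (PSeries_of_infinite_sum _ _ _ Ho). ring.
Qed.

Lemma PSeries_sin_coef x : PSeries sin_coef x = sin x.
Proof.
  unfold sin. destruct (exist_sin (Rsqr x)) as [l Hl].
  apply PSeries_odd.
  - intros n. unfold sin_coef. rewrite sinh_coef_even. ring.
  - eapply infinite_sum_ext; [|exact Hl]. intros n.
    unfold sin_coef, sin_n, Rsqr. rewrite half_sign_odd, sinh_coef_odd.
    replace (x ^ 2) with (x * x) by ring. field. apply INR_fact_neq_0.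
Qed.

Lemma PSeries_xcos_coef x : PSeries xcos_coef x = x * cos x.
Proof.
  unfold cos. destruct (exist_cos (Rsqr x)) as [l Hl].
  apply PSeries_odd.
  - intros n. unfold xcos_coef. rewrite xcosh_coef_even. ring.
  - eapply infinite_sum_ext; [|exact Hl]. intros n.
    unfold xcos_coef, cos_n, Rsqr. rewrite half_sign_odd, xcosh_coef_odd.
    replace (x ^ 2) with (x * x) by ring. field. apply INR_fact_neq_0.
Qed.

Lemma cot_coef_bounded B (HB : is_bernoulli B) : pseries_bounded (cot_coef B) 1.
Proof.
  apply (pseries_bounded_le _ (coth_coef B)); [|apply coth_coef_bounded, HB].
  intros n. unfold cot_coef. rewrite Rabs_mult, Rabs_half_sign. lra.
Qed.

Lemma PSeries_cot_coef B (HB : is_bernoulli B) x : 0 < x < 1 -> PSeries (cot_coef B) x = x * cot x.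
Proof.
  intros Hx.
  assert (Hsb : pseries_bounded sin_coef 1).
  { apply (pseries_bounded_le _ sinh_coef); [|apply sinh_coef_bounded].
    intros n. unfold sin_coef. rewrite Rabs_mult, Rabs_half_sign. lra. }
  assert (H : PSeries (PS_mult (cot_coef B) sin_coef) x
              = PSeries (cot_coef B) x * PSeries sin_coef x).
  { apply PSeries_mult; apply (CV_radius_gt_of_bounded _ 1);
      try (rewrite Rabs_pos_eq; lra); [apply cot_coef_bounded, HB | apply Hsb]. }
  rewrite (PSeries_ext _ _ _ (PS_mult_cot_sin B HB)), PSeries_xcos_coef, PSeries_sin_coef in H.
  assert (0 < sin x) by (apply sin_gt_0; pose proof PI2_1; lra).
  unfold cot. apply Rmult_eq_reg_r with (sin x); [|lra]. rewrite <- H. field. lra.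
Qed.

(** * Bernoulli numbers and [zeta(2n)] *)

Definition pole_sq (i : nat) : R := (INR (S i) * PI) ^ 2.

Lemma pole_sq_ge i : PI ^ 2 <= pole_sq i /\ INR (S i) ^ 2 <= pole_sq i /\ 9 <= pole_sq i.
Proof.
  unfold pole_sq. rewrite Rpow_mult_distr.
  assert (1 <= INR (S i)) by (apply (le_INR 1); lia).
  assert (3 < PI) by (pose proof PI2_3_2; lra).
  assert (1 <= INR (S i) ^ 2) by (rewrite <- (pow1 2); apply pow_incr; lra).
  assert (9 <= PI ^ 2) by (replace 9 with (3 ^ 2) by ring; apply pow_incr; lra).
  repeat split; nra.
Qed.

Lemma pole_sq_pos i : 0 < pole_sq i.
Proof. pose proof (pole_sq_ge i). lra. Qed.

(* [zeta2pi n = zeta(2n) / pi^(2n)] *)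
Definition zeta2pi (n : nat) : R := Series (fun i => / pole_sq i ^ n).

Lemma infinite_sum_zeta2pi n : (1 <= n)%nat ->
  infinite_sum (fun i => / pole_sq i ^ n) (zeta2pi n).
Proof.
  intros Hn. apply is_series_Reals, Series_correct.
  apply (@ex_series_le R_AbsRing R_CompleteNormedModule _ (fun i => / INR (S i) ^ 2));
    [|apply ex_series_inv_sq].
  intros i. change (Rabs (/ pole_sq i ^ n) <= / INR (S i) ^ 2).
  destruct (pole_sq_ge i) as [_ [H1 H9]].
  assert (pole_sq i <= pole_sq i ^ n) by (induction Hn; simpl; nra).
  assert (0 < INR (S i) ^ 2) by (apply pow_lt, lt_0_INR; lia).
  rewrite Rabs_pos_eq by (apply Rlt_le, Rinv_0_lt_compat; lra).
  apply Rinv_le_contravar; lra.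
Qed.

Lemma zeta2pi_pos n : (1 <= n)%nat -> 0 < zeta2pi n.
Proof.
  intros Hn.
  assert (Hpos : forall i, 0 < / pole_sq i ^ n)
    by (intros; apply Rinv_0_lt_compat, pow_lt, pole_sq_pos).
  pose proof (infinite_sum_ge_first _ _ (fun i => Rlt_le _ _ (Hpos i))
                (infinite_sum_zeta2pi n Hn)).
  specialize (Hpos 0%nat). lra.
Qed.

Lemma cot_pole_series t : 0 < t < PI ->
  infinite_sum (fun i => t ^ 2 / (pole_sq i - t ^ 2)) ((1 - t * cot t) / 2).
Proof.
  intros Ht. replace ((1 - t * cot t) / 2) with (- / 2 * (t * cot t - 1)) by field.
  eapply infinite_sum_ext; [|exact (infinite_sum_scal _ _ _ (cot_partial_fraction t Ht))].
  intros i. unfold pole_sq. pose proof (pos_INR i). pose proof PI2_3_2.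
  rewrite S_INR. field. split; [|split]; nra.
Qed.

Lemma div_sub_geometric (a u : R) k : 0 < u < a ->
  u / (a - u) = sum1 (fun m => u ^ m / a ^ m) k + u ^ S k / (a ^ k * (a - u)).
Proof.
  intros H. induction k; [simpl; field; lra|].
  rewrite IHk. assert (0 < a ^ k) by (apply pow_lt; lra). simpl. field. lra.
Qed.

(* What is left of [(1 - t cot t)/2 = sum_m t^(2m) zeta2pi m] after [k] terms,
   divided by [t^(2k+2)]. *)
Definition cot_remainder (k : nat) (t : R) : R :=
  ((1 - t * cot t) / 2 - sum1 (fun m => (t ^ 2) ^ m * zeta2pi m) k) / (t ^ 2) ^ S k.

Lemma cot_remainder_series k t : 0 < t < PI ->
  infinite_sum (fun i => / (pole_sq i ^ k * (pole_sq i - t ^ 2))) (cot_remainder k t).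
Proof.
  intros Ht.
  assert (Hfam : infinite_sum (fun i => sum1 (fun m => (t ^ 2) ^ m / pole_sq i ^ m) k)
                   (sum1 (fun m => (t ^ 2) ^ m * zeta2pi m) k)).
  { apply (infinite_sum_sum1 (fun m i => (t ^ 2) ^ m / pole_sq i ^ m)). intros m Hm.
    eapply infinite_sum_ext;
      [|exact (infinite_sum_scal _ _ ((t ^ 2) ^ m) (infinite_sum_zeta2pi m ltac:(lia)))].
    intros i. unfold Rdiv. ring. }
  pose proof (infinite_sum_scal _ _ (/ (t ^ 2) ^ S k)
                (infinite_sum_minus _ _ _ _ (cot_pole_series t Ht) Hfam)) as H.
  unfold cot_remainder. rewrite Rmult_comm in H. eapply infinite_sum_ext; [|exact H].
  intros i. cbv beta. destruct (pole_sq_ge i) as [HPI _]. pose proof (pole_sq_pos i).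
  assert (Hta : t ^ 2 < pole_sq i) by (simpl in *; nra).
  rewrite (div_sub_geometric (pole_sq i) (t ^ 2) k) by (split; [apply pow_lt|]; lra).
  assert (0 < pole_sq i ^ k) by (apply pow_lt; lra).
  assert (0 < (t ^ 2) ^ S k) by (apply pow_lt, pow_lt; lra).
  field. repeat split; lra.
Qed.

Lemma cot_remainder_bounds k t : 0 < t < 1 ->
  0 <= cot_remainder k t - zeta2pi (S k) <= 2 * t ^ 2 * zeta2pi (S (S k)).
Proof.
  intros Ht. pose proof PI2_3_2.
  pose proof (infinite_sum_minus _ _ _ _ (cot_remainder_series k t ltac:(lra))
                (infinite_sum_zeta2pi (S k) ltac:(lia))) as D.
  assert (Hterm : forall i, 0 <= / (pole_sq i ^ k * (pole_sq i - t ^ 2)) - / pole_sq i ^ S k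
                            <= 2 * t ^ 2 * / pole_sq i ^ S (S k)).
  { intros i. destruct (pole_sq_ge i) as [_ [_ H9]].
    assert (0 < t ^ 2 < 1) by (simpl; nra).
    assert (0 < pole_sq i ^ k) by (apply pow_lt; lra).
    replace (/ (pole_sq i ^ k * (pole_sq i - t ^ 2)) - / pole_sq i ^ S k)
      with (t ^ 2 / (pole_sq i ^ S k * (pole_sq i - t ^ 2))) by (simpl; field; lra).
    assert (0 < pole_sq i ^ S k) by (apply pow_lt; lra).
    split; [apply Rlt_le, Rdiv_lt_0_compat; [lra | apply Rmult_lt_0_compat; lra]|].
    replace (2 * t ^ 2 * / pole_sq i ^ S (S k))
      with (t ^ 2 * / (pole_sq i ^ S k * (pole_sq i / 2))) by (simpl; field; lra).
    unfold Rdiv. apply Rmult_le_compat_l; [lra|].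
    apply Rinv_le_contravar; [apply Rmult_lt_0_compat; lra|].
    apply Rmult_le_compat_l; lra. }
  split.
  - apply (infinite_sum_nonneg _ _ (fun i => proj1 (Hterm i)) D).
  - apply (infinite_sum_le _ _ _ _ (fun i => proj2 (Hterm i)) D).
    apply infinite_sum_scal, infinite_sum_zeta2pi. lia.
Qed.

Lemma cot_coef_odd B (HB : is_bernoulli B) m : cot_coef B (2 * m + 1) = 0.
Proof. unfold cot_coef. rewrite (coth_coef_odd B HB m). ring. Qed.

Lemma cot_coef_0 B (HB : is_bernoulli B) : cot_coef B 0 = 1.
Proof. unfold cot_coef. rewrite (coth_coef_0 B HB). unfold half_sign. simpl. ring. Qed.

Lemma PSeries_cot_coef_tail B (HB : is_bernoulli B) k :
  (forall m, (1 <= m <= k)%nat -> cot_coef B (2 * m) = -2 * zeta2pi m) ->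
  forall t, 0 < t < 1 ->
  PSeries (PS_decr_n (cot_coef B) (2 * S k)) t = -2 * cot_remainder k t.
Proof.
  intros IH t Ht.
  assert (Hex : ex_pseries (cot_coef B) t).
  { apply CV_radius_inside, (CV_radius_gt_of_bounded _ 1);
      [apply cot_coef_bounded, HB | rewrite Rabs_pos_eq; lra]. }
  pose proof (PSeries_decr_n (cot_coef B) (2 * k + 1) t Hex) as E.
  replace (S (2 * k + 1)) with (2 * S k)%nat in E by lia.
  rewrite (PSeries_cot_coef B HB t Ht) in E.
  rewrite (sum_f_R0_even (fun j => cot_coef B j * t ^ j))
    in E by (intros m; rewrite cot_coef_odd by exact HB; ring).
  rewrite sum_f_R0_sum1 in E. change (2 * 0)%nat with 0%nat in E.
  rewrite pow_O, (cot_coef_0 B HB), (pow_mult t 2 (S k)) in E.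
  rewrite (sum1_ext _ (fun m => -2 * ((t ^ 2) ^ m * zeta2pi m))) in E
    by (intros m Hm; rewrite IH, <- pow_mult by lia; ring).
  rewrite sum1_scal in E.
  assert (0 < (t ^ 2) ^ S k) by (apply pow_lt, pow_lt; lra).
  unfold cot_remainder. apply Rmult_eq_reg_l with ((t ^ 2) ^ S k); [|lra].
  set (s := sum1 _ k) in E |- *.
  transitivity (-2 * ((1 - t * cot t) / 2 - s)); [lra | field; lra].
Qed.

(* Strong induction: by [PSeries_cot_coef_tail] the tail series, continuous at
   [0], is squeezed to [-2 zeta2pi (k+1)] by [cot_remainder_bounds]. *)
Lemma cot_coef_even B (HB : is_bernoulli B) n : (1 <= n)%nat -> cot_coef B (2 * n) = -2 * zeta2pi n.
Proof.
  induction n as [n IH] using lt_wf_ind. intros Hn.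
  destruct n as [|k]; [lia|].
  set (a := PS_decr_n (cot_coef B) (2 * S k)).
  assert (Hcont : continuity_pt (PSeries a) 0).
  { apply PSeries_continuity, (CV_radius_gt_of_bounded _ (1 / 2)); [|rewrite Rabs_R0; lra].
    apply pseries_bounded_of_ex_series, ex_pseries_R. unfold a. apply ex_pseries_decr_n.
    - right. exists 2. unfold mult, one; simpl. field.
    - apply CV_radius_inside, (CV_radius_gt_of_bounded _ 1);
        [apply cot_coef_bounded, HB | rewrite Rabs_pos_eq; lra]. }
  assert (Hbound : forall t, 0 < t < 1 ->
            Rabs (PSeries a t - -2 * zeta2pi (S k)) <= 4 * zeta2pi (S (S k)) * t ^ 2).
  { intros t Ht. unfold a.
    rewrite (PSeries_cot_coef_tail B HB k (fun m Hm => IH m ltac:(lia) ltac:(lia)) t Ht).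
    pose proof (cot_remainder_bounds k t Ht).
    rewrite Rabs_left1 by lra. lra. }
  pose proof (continuity_pt_0_eq _ _ _ 1 ltac:(lra) Hcont Hbound) as L.
  rewrite PSeries_0 in L. unfold a, PS_decr_n in L. rewrite Nat.add_0_r in L. exact L.
Qed.

Lemma bernoulli_zeta2pi B (HB : is_bernoulli B) n : (1 <= n)%nat ->
  Rabs (B (2 * n)%nat) * 2 ^ (2 * n) / INR (fact (2 * n)) = 2 * zeta2pi n.
Proof.
  intros Hn. pose proof (cot_coef_even B HB n Hn) as H.
  unfold cot_coef, coth_coef in H. rewrite half_sign_even in H.
  replace (Nat.eqb (2 * n) 1) with false in H by (symmetry; apply Nat.eqb_neq; lia).
  rewrite Rplus_0_r in H.
  apply (f_equal Rabs) in H. rewrite Rabs_mult, pow_1_abs, Rmult_1_l in H.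
  pose proof (zeta2pi_pos n Hn).
  rewrite (Rabs_left (-2 * zeta2pi n)) in H by lra.
  replace (- (-2 * zeta2pi n)) with (2 * zeta2pi n) in H by ring.
  rewrite <- H. unfold Rdiv. rewrite !Rabs_mult.
  rewrite (Rabs_pos_eq (2 ^ (2 * n))) by (apply pow_le; lra).
  rewrite (Rabs_pos_eq (/ INR (fact (2 * n)))) by (apply Rlt_le, Rinv_0_lt_compat, INR_fact_lt_0).
  reflexivity.
Qed.

Lemma coefB_zeta2pi B (HB : is_bernoulli B) j : coefB B j = 4 * INR j * zeta2pi (S j).
Proof.
  unfold coefB. pose proof (bernoulli_zeta2pi B HB (S j) ltac:(lia)) as H.
  replace (2 * S j)%nat with (2 * j + 2)%nat in H by lia.
  replace (2 * j + 3)%nat with (S (2 * j + 2)) by lia. rewrite <- tech_pow_Rmult.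
  transitivity (2 * INR j * (Rabs (B (2 * j + 2)%nat) * 2 ^ (2 * j + 2)
                             / INR (fact (2 * j + 2)))); [unfold Rdiv; ring | rewrite H; ring].
Qed.

Lemma div_tan t : t / tan t = t * cot t.
Proof. unfold tan, cot, Rdiv. rewrite Rinv_mult, Rinv_inv. ring. Qed.

Lemma F_pole_series t : 0 < t < PI ->
  infinite_sum (fun i => 4 * t ^ 4 / (pole_sq i - t ^ 2) ^ 2) ((t / sin t) ^ 2 + t / tan t - 2).
Proof.
  intros Ht.
  pose proof (infinite_sum_plus _ _ _ _ (cot_partial_fraction t Ht)
                (csc_sq_partial_fraction t Ht)) as H.
  assert (0 < sin t) by (apply sin_gt_0; lra).
  replace ((t / sin t) ^ 2 + t / tan t - 2) with (t * cot t - 1 + (t ^ 2 * / sin t ^ 2 - 1))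
    by (rewrite div_tan; field; lra).
  eapply infinite_sum_ext; [|exact H]. intros i. cbv beta. unfold pole_sq.
  assert (t < INR (S i) * PI)
    by (assert (1 <= INR (S i)) by (apply (le_INR 1); lia); pose proof PI_RGT_0; nra).
  field. repeat split; nra.
Qed.

(* [x^2/(1-x)^2 = sum_(j>=1) j x^(j+1)]; [weight M x] is the tail after [M]
   terms, divided by [x^(M+2)]. *)
Definition weight (M : nat) (x : R) : R := INR M / (1 - x) + / (1 - x) ^ 2.

Lemma weight_tail M x : x <> 1 ->
  x ^ 2 / (1 - x) ^ 2 - sum1 (fun j => INR j * x ^ (j + 1)) M = x ^ (M + 2) * weight M x.
Proof.
  intros Hx. unfold weight. induction M; [simpl; field; lra|].
  replace (x ^ 2 / (1 - x) ^ 2 - sum1 (fun j => INR j * x ^ (j + 1)) (S M))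
    with (x ^ 2 / (1 - x) ^ 2 - sum1 (fun j => INR j * x ^ (j + 1)) M
          - INR (S M) * x ^ (S M + 1)) by (simpl; ring).
  rewrite IHM, S_INR.
  replace (S M + 1)%nat with (M + 2)%nat by lia.
  replace (S M + 2)%nat with (S (M + 2)) by lia. simpl pow.
  field. lra.
Qed.

Lemma Fdiff_series B (HB : is_bernoulli B) M t : 0 < t < PI ->
  infinite_sum (fun i => 4 * weight M (t ^ 2 / pole_sq i) / pole_sq i ^ (M + 2))
               (Fdiff B (S M) t / t ^ (2 * S M + 2)).
Proof.
  intros Ht.
  assert (Hfam : infinite_sum
                   (fun i => sum1 (fun j => 4 * INR j * t ^ (2 * j + 2) / pole_sq i ^ (j + 1)) M)
                   (sum1 (fun j => coefB B j * t ^ (2 * j + 2)) M)).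
  { apply (infinite_sum_sum1 (fun j i => 4 * INR j * t ^ (2 * j + 2) / pole_sq i ^ (j + 1))).
    intros j Hj. rewrite coefB_zeta2pi by exact HB.
    replace (4 * INR j * zeta2pi (S j) * t ^ (2 * j + 2))
      with (4 * INR j * t ^ (2 * j + 2) * zeta2pi (S j)) by ring.
    eapply infinite_sum_ext;
      [|exact (infinite_sum_scal _ _ _ (infinite_sum_zeta2pi (S j) ltac:(lia)))].
    intros i. cbv beta. rewrite Nat.add_1_r. unfold Rdiv. ring. }
  pose proof (infinite_sum_scal _ _ (/ t ^ (2 * S M + 2))
                (infinite_sum_minus _ _ _ _ (F_pole_series t Ht) Hfam)) as H.
  assert (Htp : 0 < t ^ (2 * S M + 2)) by (apply pow_lt; lra).
  replace (Fdiff B (S M) t / t ^ (2 * S M + 2)) with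
    (/ t ^ (2 * S M + 2) * ((t / sin t) ^ 2 + t / tan t - 2
                            - sum1 (fun j => coefB B j * t ^ (2 * j + 2)) M))
    by (unfold Fdiff; replace (S M - 1)%nat with M by lia; unfold Rdiv; ring).
  eapply infinite_sum_ext; [|exact H]. intros i. cbv beta.
  destruct (pole_sq_ge i) as [HPI _]. pose proof (pole_sq_pos i).
  assert (Hta : t ^ 2 < pole_sq i) by (simpl in *; nra).
  set (x := t ^ 2 / pole_sq i).
  assert (Hxt : forall k, x ^ k = t ^ (2 * k) / pole_sq i ^ k)
    by (intros k; unfold x, Rdiv; rewrite Rpow_mult_distr, pow_mult, pow_inv; reflexivity).
  assert (Hx1 : x <> 1).
  { unfold x. intros Hx. apply Rmult_eq_compat_r with (r := pole_sq i) in Hx.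
    unfold Rdiv in Hx. rewrite Rmult_assoc, Rinv_l, Rmult_1_r, Rmult_1_l in Hx; lra. }
  replace (4 * t ^ 4 / (pole_sq i - t ^ 2) ^ 2) with (4 * (x ^ 2 / (1 - x) ^ 2))
    by (unfold x; field; split; lra).
  rewrite (sum1_ext _ (fun j => 4 * (INR j * x ^ (j + 1))))
    by (intros j Hj; rewrite Hxt; replace (2 * (j + 1))%nat with (2 * j + 2)%nat by lia;
        field; apply pow_nonzero; lra).
  rewrite sum1_scal, <- Rmult_minus_distr_l, weight_tail, Hxt by exact Hx1.
  replace (2 * (M + 2))%nat with (2 * S M + 2)%nat by lia.
  field. split; [apply pow_nonzero|]; lra.
Qed.

(** * Monotonicity of the weighted series *)

Lemma weight_0 M : weight M 0 = INR (S M).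
Proof. unfold weight. rewrite S_INR. field. Qed.

Lemma weight_pos M x : x < 1 -> 0 < weight M x.
Proof.
  intros Hx. unfold weight. pose proof (pos_INR M).
  assert (0 <= INR M / (1 - x))
    by (apply Rmult_le_pos; [lra | apply Rlt_le, Rinv_0_lt_compat; lra]).
  assert (0 < / (1 - x) ^ 2) by (apply Rinv_0_lt_compat, pow_lt; lra).
  lra.
Qed.

Lemma weight_lt M x y : 0 <= x -> x < y -> y < 1 -> weight M x < weight M y.
Proof.
  intros Hx Hxy Hy. unfold weight. pose proof (pos_INR M).
  assert (INR M / (1 - x) <= INR M / (1 - y)).
  { unfold Rdiv. apply Rmult_le_compat_l; [lra|]. apply Rinv_le_contravar; lra. }
  assert (/ (1 - x) ^ 2 < / (1 - y) ^ 2).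
  { apply Rinv_lt_contravar; [apply Rmult_lt_0_compat; apply pow_lt; lra|]. simpl. nra. }
  lra.
Qed.

Lemma weight_lipschitz M x y : 0 <= x -> x <= y -> y <= 1 / 4 ->
  weight M y - weight M x <= 8 * INR (S M) * (y - x).
Proof.
  intros Hx Hxy Hy. unfold weight. rewrite S_INR. pose proof (pos_INR M).
  replace (INR M / (1 - y) + / (1 - y) ^ 2 - (INR M / (1 - x) + / (1 - x) ^ 2))
    with ((y - x) * (INR M / ((1 - x) * (1 - y)) + (2 - x - y) / ((1 - x) ^ 2 * (1 - y) ^ 2)))
    by (field; lra).
  replace (8 * (INR M + 1) * (y - x)) with ((y - x) * (8 * INR M + 8)) by ring.
  apply Rmult_le_compat_l; [lra|].
  assert (A1 : INR M / ((1 - x) * (1 - y)) <= INR M * 2).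
  { unfold Rdiv. apply Rmult_le_compat_l; [lra|].
    replace 2 with (/ (1 / 2)) by field. apply Rinv_le_contravar; nra. }
  assert (A2 : (2 - x - y) / ((1 - x) ^ 2 * (1 - y) ^ 2) <= 2 * 4).
  { unfold Rdiv. apply Rmult_le_compat;
      [lra | apply Rlt_le, Rinv_0_lt_compat, Rmult_lt_0_compat; apply pow_lt; lra | lra|].
    replace 4 with (/ (1 / 4)) by field. apply Rinv_le_contravar; [lra|].
    assert ((3 / 4) ^ 2 <= (1 - x) ^ 2) by (apply pow_incr; lra).
    assert ((3 / 4) ^ 2 <= (1 - y) ^ 2) by (apply pow_incr; lra).
    assert ((3 / 4) ^ 2 * (3 / 4) ^ 2 <= (1 - x) ^ 2 * (1 - y) ^ 2)
      by (apply Rmult_le_compat; try apply pow_le; lra).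
    simpl in *. lra. }
  lra.
Qed.

(* [Fdiff t / t^(2N+2) = weight_sum M (t^2)]; its values at [0] and [pi^2/4] are
   [lambda_N] and [mu_N]. *)
Definition weight_sum (M : nat) (u : R) : R :=
  Series (fun i => 4 * weight M (u / pole_sq i) / pole_sq i ^ (M + 2)).

Section WeightSum.

Variable M : nat.

Lemma div_pole_sq_range u i : 0 <= u <= PI ^ 2 / 4 -> 0 <= u / pole_sq i <= 1 / 4.
Proof.
  intros Hu. destruct (pole_sq_ge i) as [HPI _]. pose proof (pole_sq_pos i).
  split; [apply Rmult_le_pos; [lra | apply Rlt_le, Rinv_0_lt_compat; lra]|].
  apply Rmult_le_reg_r with (pole_sq i); [lra|].
  unfold Rdiv. rewrite Rmult_assoc, Rinv_l by lra. lra.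
Qed.

Lemma weight_sum_series u : 0 <= u <= PI ^ 2 / 4 ->
  infinite_sum (fun i => 4 * weight M (u / pole_sq i) / pole_sq i ^ (M + 2)) (weight_sum M u).
Proof.
  intros Hu. apply is_series_Reals, Series_correct.
  apply (@ex_series_le R_AbsRing R_CompleteNormedModule _
           (fun i => 4 * weight M (1 / 4) * / pole_sq i ^ (M + 2))).
  - intros i. change (Rabs (4 * weight M (u / pole_sq i) / pole_sq i ^ (M + 2))
                       <= 4 * weight M (1 / 4) * / pole_sq i ^ (M + 2)).
    pose proof (div_pole_sq_range u i Hu) as Hx.
    assert (0 < / pole_sq i ^ (M + 2)) by (apply Rinv_0_lt_compat, pow_lt, pole_sq_pos).
    pose proof (weight_pos M (u / pole_sq i) ltac:(lra)).
    assert (weight M (u / pole_sq i) <= weight M (1 / 4)).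
    { destruct (Req_dec (u / pole_sq i) (1 / 4)) as [->|]; [lra|].
      apply Rlt_le, weight_lt; lra. }
    rewrite Rabs_pos_eq by (apply Rmult_le_pos; lra).
    unfold Rdiv. apply Rmult_le_compat_r; lra.
  - exists (4 * weight M (1 / 4) * zeta2pi (M + 2)). apply is_series_Reals.
    apply infinite_sum_scal, infinite_sum_zeta2pi. lia.
Qed.

Lemma weight_sum_lt u v : 0 <= u < v -> v <= PI ^ 2 / 4 -> weight_sum M u < weight_sum M v.
Proof.
  intros Huv Hv.
  assert (Hlt : forall i, 4 * weight M (u / pole_sq i) / pole_sq i ^ (M + 2)
                          < 4 * weight M (v / pole_sq i) / pole_sq i ^ (M + 2)).
  { intros i. pose proof (div_pole_sq_range v i ltac:(lra)). pose proof (pole_sq_pos i).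
    assert (0 <= u / pole_sq i < v / pole_sq i).
    { split; [apply div_pole_sq_range; lra|].
      unfold Rdiv; apply Rmult_lt_compat_r; [apply Rinv_0_lt_compat|]; lra. }
    unfold Rdiv. apply Rmult_lt_compat_r; [apply Rinv_0_lt_compat, pow_lt; lra|].
    apply Rmult_lt_compat_l; [lra|]. apply weight_lt; lra. }
  apply (infinite_sum_lt _ _ _ _ (fun i => Rlt_le _ _ (Hlt i)) (Hlt 0%nat));
    apply weight_sum_series; lra.
Qed.

Lemma weight_sum_lipschitz u v : 0 <= u <= v -> v <= PI ^ 2 / 4 ->
  weight_sum M v - weight_sum M u <= 32 * INR (S M) * zeta2pi (M + 3) * (v - u).
Proof.
  intros Huv Hv.
  pose proof (infinite_sum_minus _ _ _ _ (weight_sum_series v ltac:(lra))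
                (weight_sum_series u ltac:(lra))) as D.
  pose proof (infinite_sum_scal _ _ (32 * INR (S M) * (v - u))
                (infinite_sum_zeta2pi (M + 3) ltac:(lia))) as Z.
  replace (32 * INR (S M) * zeta2pi (M + 3) * (v - u))
    with (32 * INR (S M) * (v - u) * zeta2pi (M + 3)) by ring.
  refine (infinite_sum_le _ _ _ _ _ D Z). intros i. cbv beta.
  pose proof (div_pole_sq_range u i ltac:(lra)). pose proof (div_pole_sq_range v i ltac:(lra)).
  pose proof (pole_sq_pos i).
  assert (0 < pole_sq i ^ (M + 2)) by (apply pow_lt; lra).
  pose proof (weight_lipschitz M (u / pole_sq i) (v / pole_sq i) ltac:(lra)
                ltac:(unfold Rdiv; apply Rmult_le_compat_r; [apply Rlt_le, Rinv_0_lt_compat|]; lra)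
                ltac:(lra)) as Hl.
  replace (M + 3)%nat with (S (M + 2)) by lia. simpl pow.
  replace (4 * weight M (v / pole_sq i) / pole_sq i ^ (M + 2)
           - 4 * weight M (u / pole_sq i) / pole_sq i ^ (M + 2))
    with (4 * (weight M (v / pole_sq i) - weight M (u / pole_sq i)) / pole_sq i ^ (M + 2))
    by (field; lra).
  replace (32 * INR (S M) * (v - u) * / (pole_sq i * pole_sq i ^ (M + 2)))
    with (4 * (8 * INR (S M) * (v / pole_sq i - u / pole_sq i)) / pole_sq i ^ (M + 2))
    by (field; lra).
  unfold Rdiv. apply Rmult_le_compat_r; [apply Rlt_le, Rinv_0_lt_compat; lra|]. lra.
Qed.

Lemma weight_sum_lower_sharp lam :
  (forall t, 0 < t < PI / 2 -> lam < weight_sum M (t ^ 2)) -> lam <= weight_sum M 0.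
Proof.
  intros H. pose proof PI2_1. pose proof (zeta2pi_pos (M + 3) ltac:(lia)).
  pose proof (pos_INR (S M)).
  apply (le_of_forall_lt_linear _ _ (32 * INR (S M) * zeta2pi (M + 3)) 1); [lra|].
  intros s Hs. specialize (H s ltac:(lra)).
  assert (s ^ 2 <= PI ^ 2 / 4) by (simpl; nra).
  pose proof (weight_sum_lipschitz 0 (s ^ 2) ltac:(split; [lra | apply pow2_ge_0]) ltac:(lra)).
  assert (32 * INR (S M) * zeta2pi (M + 3) * (s ^ 2 - 0)
          <= 32 * INR (S M) * zeta2pi (M + 3) * s)
    by (apply Rmult_le_compat_l; [apply Rmult_le_pos; lra | simpl; nra]).
  lra.
Qed.

Lemma weight_sum_upper_sharp mu :
  (forall t, 0 < t < PI / 2 -> weight_sum M (t ^ 2) < mu) -> weight_sum M (PI ^ 2 / 4) <= mu.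
Proof.
  intros H. pose proof PI_RGT_0. pose proof (zeta2pi_pos (M + 3) ltac:(lia)).
  pose proof (pos_INR (S M)).
  apply (le_of_forall_lt_linear _ _ (32 * INR (S M) * zeta2pi (M + 3) * PI) (PI / 2)); [lra|].
  intros s Hs. specialize (H (PI / 2 - s) ltac:(lra)).
  assert ((PI / 2 - s) ^ 2 <= PI ^ 2 / 4) by (simpl; nra).
  pose proof (weight_sum_lipschitz ((PI / 2 - s) ^ 2) (PI ^ 2 / 4)
                ltac:(split; [apply pow2_ge_0 | lra]) ltac:(lra)).
  assert (32 * INR (S M) * zeta2pi (M + 3) * (PI ^ 2 / 4 - (PI / 2 - s) ^ 2)
          <= 32 * INR (S M) * zeta2pi (M + 3) * PI * s)
    by (rewrite (Rmult_assoc _ PI); apply Rmult_le_compat_l;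
        [apply Rmult_le_pos; lra | simpl; nra]).
  lra.
Qed.

End WeightSum.

Lemma Fdiff_weight_sum B (HB : is_bernoulli B) M t : 0 < t < PI / 2 ->
  Fdiff B (S M) t = weight_sum M (t ^ 2) * t ^ (2 * S M + 2).
Proof.
  intros Ht. pose proof PI_RGT_0.
  assert (0 < t ^ (2 * S M + 2)) by (apply pow_lt; lra).
  rewrite <- (uniqueness_sum _ _ _ (Fdiff_series B HB M t ltac:(lra))
               (weight_sum_series M (t ^ 2) ltac:(split; [apply pow2_ge_0 | simpl; nra]))).
  field. lra.
Qed.

Lemma lambdaN_weight_sum B (HB : is_bernoulli B) M : lambdaN B (S M) = weight_sum M 0.
Proof.
  pose proof PI_RGT_0.
  apply (uniqueness_sum (fun i => 4 * weight M (0 / pole_sq i) / pole_sq i ^ (M + 2)));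
    [|apply weight_sum_series; split; [lra | apply Rmult_le_pos; [apply pow2_ge_0 | lra]]].
  unfold lambdaN. rewrite coefB_zeta2pi by exact HB.
  eapply infinite_sum_ext;
    [|exact (infinite_sum_scal _ _ (4 * INR (S M)) (infinite_sum_zeta2pi (S (S M)) ltac:(lia)))].
  intros i. cbv beta. pose proof (pole_sq_pos i).
  unfold Rdiv. rewrite Rmult_0_l, weight_0.
  replace (M + 2)%nat with (S (S M)) by lia. ring.
Qed.

Lemma muN_weight_sum M S1 S2 :
  infinite_sum (series_term (2 * S M - 2)) S1 -> infinite_sum (series_term (2 * S M)) S2 ->
  muN (S M) S1 S2 = weight_sum M (PI ^ 2 / 4).
Proof.
  intros HS1 HS2. pose proof PI_RGT_0.
  apply (uniqueness_sum (fun i => 4 * weight M (PI ^ 2 / 4 / pole_sq i) / pole_sq i ^ (M + 2)));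
    [|apply weight_sum_series; split; [|lra]; apply Rmult_le_pos; [apply pow2_ge_0 | lra]].
  pose proof (infinite_sum_minus _ _ _ _
                (infinite_sum_scal _ _ (64 * INR (S M) / PI ^ (2 * S M + 2)) HS1)
                (infinite_sum_scal _ _ (16 * (INR (S M) - 1) / PI ^ (2 * S M + 2)) HS2)) as D.
  unfold muN. eapply infinite_sum_ext; [|exact D]. intros i. cbv beta.
  unfold series_term, pole_sq, weight. rewrite Nat.add_1_r.
  replace (2 * S M - 2)%nat with (2 * M)%nat by lia.
  replace (2 * S M + 2)%nat with (2 * M + 2 + 2)%nat by lia.
  replace (2 * S M)%nat with (2 * M + 2)%nat by lia.
  set (k := INR (S i)).
  assert (Hk : 1 <= k) by (apply (le_INR 1); lia).
  rewrite !pow_add, !pow_mult.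
  replace ((k * PI) ^ 2) with (k ^ 2 * PI ^ 2) by ring.
  rewrite !Rpow_mult_distr, S_INR.
  assert (0 < (k ^ 2) ^ M) by (apply pow_lt, pow_lt; lra).
  assert (0 < (PI ^ 2) ^ M) by (apply pow_lt, pow_lt; lra).
  assert (4 * k ^ 2 - 1 <> 0) by (simpl; nra).
  replace (1 - PI ^ 2 / 4 / (k ^ 2 * PI ^ 2)) with ((4 * k ^ 2 - 1) / (4 * k ^ 2))
    by (field; split; lra).
  field. repeat split; try lra; simpl; nra.
Qed.

Theorem theorem6 (B : nat -> R) (N : nat) (S1 S2 : R) :
  is_bernoulli B ->
  (1 <= N)%nat ->
  infinite_sum (series_term (2 * N - 2)%nat) S1 ->
  infinite_sum (series_term (2 * N)%nat) S2 ->
  (forall t : R, 0 < t < PI / 2 ->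
     lambdaN B N * t ^ (2 * N + 2)%nat < Fdiff B N t /\
     Fdiff B N t < muN N S1 S2 * t ^ (2 * N + 2)%nat) /\
  (forall lam : R,
     (forall t : R, 0 < t < PI / 2 -> lam * t ^ (2 * N + 2)%nat < Fdiff B N t) ->
     lam <= lambdaN B N) /\
  (forall mu : R,
     (forall t : R, 0 < t < PI / 2 -> Fdiff B N t < mu * t ^ (2 * N + 2)%nat) ->
     muN N S1 S2 <= mu).
Proof.
  intros HB HN HS1 HS2. destruct N as [|M]; [lia|].
  rewrite (lambdaN_weight_sum B HB M), (muN_weight_sum M S1 S2 HS1 HS2).
  assert (Ht2 : forall t, 0 < t < PI / 2 -> 0 < t ^ 2 /\ t ^ 2 < PI ^ 2 / 4)
    by (intros t Ht; simpl; split; nra).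
  assert (Htp : forall t, 0 < t < PI / 2 -> 0 < t ^ (2 * S M + 2)) by (intros; apply pow_lt; lra).
  split; [|split].
  - intros t Ht. rewrite (Fdiff_weight_sum B HB M t Ht).
    destruct (Ht2 t Ht). specialize (Htp t Ht).
    split; apply Rmult_lt_compat_r; try apply weight_sum_lt; lra.
  - intros lam Hlam. apply weight_sum_lower_sharp. intros t Ht.
    specialize (Hlam t Ht). rewrite (Fdiff_weight_sum B HB M t Ht) in Hlam.
    apply Rmult_lt_reg_r in Hlam; [exact Hlam | apply Htp, Ht].
  - intros mu Hmu. apply weight_sum_upper_sharp. intros t Ht.
    specialize (Hmu t Ht). rewrite (Fdiff_weight_sum B HB M t Ht) in Hmu.
    apply Rmult_lt_reg_r in Hmu; [exact Hmu | apply Htp, Ht].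
Qed.
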